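(* Let $\Omega\subset\mathbb{C}$ be a simply connected domain and let $(g,\mathcal{P},\mathcal{Q})$ be a Weierstrass data of the first kind on $\Omega$. Define $h:=\frac{1}{g}$ and $\mathcal{N}:=2\mathcal{P}$. Then there exists a $\mathcal{C}^2$ function $\mathcal{M}:\Omega\to\mathbb{R}$ such that $$\mathcal{M}_z=\frac{1}{g}\,\mathcal{P}_z+g\,\mathcal{Q}_z .$$ Moreover, for any such $\mathcal{M}$, the triple $(h,\mathcal{M},\mathcal{N})$ is a Weierstrass data of the second kind on $\Omega$, and $$\mathcal{M}_z-(\mathrm{Re}\,h)\,\mathcal{N}_z=-\frac{1}{\overline{g}}\left(\mathcal{P}_z-|g|^2\mathcal{Q}_z\right).$$
   Context: $\Omega\subset\mathbb{R}^2\equiv\mathbb{C}$ has complex coordinate $z=u+iv$, and $\partial_z=\frac12(\partial_u-i\partial_v)$, $\partial_{\overline z}=\frac12(\partial_u+i\partial_v)$; subscripts denote partial derivatives. A Weierstrass data of the first kind on $\Omega$ is a triple $(g,\mathcal{P},\mathcal{Q})$ where $g:\Omega\to\mathbb{C}\setminus\{0\}$ and $\mathcal{P},\mathcal{Q}:\Omega\to\mathbb{R}$ are $\mathcal{C}^2$, satisfying $g_{\overline z}=0$, $\mathcal{P}_{z\overline z}=|g|^2\mathcal{Q}_{z\overline z}$, and $\mathcal{P}_z-|g|^2\mathcal{Q}_z\neq0$ at every point of $\Omega$. A Weierstrass data of the second kind on $\Omega$ is a triple $(h,\mathcal{M},\mathcal{N})$ where $h:\Omega\to\mathbb{C}\setminus\{0\}$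 and $\mathcal{M},\mathcal{N}:\Omega\to\mathbb{R}$ are $\mathcal{C}^2$, satisfying $h_{\overline z}=0$, $\mathcal{M}_{z\overline z}=(\mathrm{Re}\,h)\,\mathcal{N}_{z\overline z}$, and $\mathcal{M}_z-(\mathrm{Re}\,h)\,\mathcal{N}_z\neq0$ at every point of $\Omega$. *)

From Stdlib Require Import Reals.
From Coquelicot Require Import Coquelicot.
Open Scope R_scope.

Definition pu (f : C -> R) (z : C) : R := Derive (fun t => f (fst z + t, snd z)) 0.
Definition pv (f : C -> R) (z : C) : R := Derive (fun t => f (fst z, snd z + t)) 0.

Definition C1_on (Om : C -> Prop) (f : C -> R) : Prop :=
  forall z, Om z ->
    continuous f z /\
    ex_derive (fun t => f (fst z + t, snd z)) 0 /\
    ex_derive (fun t => f (fst z, snd z + t)) 0 /\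
    continuous (pu f) z /\ continuous (pv f) z.

Definition C2_on (Om : C -> Prop) (f : C -> R) : Prop :=
  C1_on Om f /\ C1_on Om (pu f) /\ C1_on Om (pv f).

Definition C2c_on (Om : C -> Prop) (F : C -> C) : Prop :=
  C2_on Om (fun w => Re (F w)) /\ C2_on Om (fun w => Im (F w)).

Definition cpu (F : C -> C) (z : C) : C :=
  (pu (fun w => Re (F w)) z, pu (fun w => Im (F w)) z).
Definition cpv (F : C -> C) (z : C) : C :=
  (pv (fun w => Re (F w)) z, pv (fun w => Im (F w)) z).

Local Open Scope C_scope.
Definition dz (F : C -> C) (z : C) : C := / 2 * (cpu F z - Ci * cpv F z).
Definition dzb (F : C -> C) (z : C) : C := / 2 * (cpu F z + Ci * cpv F z).

Definition cR (f : C -> R) : C -> C := fun z => RtoC (f z).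

Definition dzR (f : C -> R) : C -> C := dz (cR f).
Definition dzzbR (f : C -> R) : C -> C := dz (dzb (cR f)).

Local Open Scope R_scope.
Definition unit_interval (s : R) : Prop := 0 <= s <= 1.

Definition path_in (Om : C -> Prop) (gam : R -> C) : Prop :=
  (forall s, continuous gam s) /\ (forall s, unit_interval s -> Om (gam s)).

Definition domain (Om : C -> Prop) : Prop :=
  open Om /\ (exists z, Om z) /\
  forall a b, Om a -> Om b ->
    exists gam, path_in Om gam /\ gam 0 = a /\ gam 1 = b.

Definition simply_connected (Om : C -> Prop) : Prop :=
  domain Om /\
  forall gam : R -> C, path_in Om gam -> gam 0 = gam 1 ->
    exists H : R * R -> C,
      (forall p, continuous H p) /\
      (forall s t, unit_interval s -> unit_interval t -> Om (H (s, t))) /\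
      (forall s, H (s, 0) = gam s) /\
      (forall s, H (s, 1) = gam 0) /\
      (forall t, H (0, t) = gam 0) /\
      (forall t, H (1, t) = gam 0).

Local Open Scope C_scope.
Definition WD1 (Om : C -> Prop) (g : C -> C) (P Q : C -> R) : Prop :=
  C2c_on Om g /\ C2_on Om P /\ C2_on Om Q /\
  (forall z, Om z -> g z <> 0) /\
  (forall z, Om z -> dzb g z = 0) /\
  (forall z, Om z -> dzzbR P z = RtoC (Cmod (g z) ^ 2)%R * dzzbR Q z) /\
  (forall z, Om z -> dzR P z - RtoC (Cmod (g z) ^ 2)%R * dzR Q z <> 0).

Definition WD2 (Om : C -> Prop) (h : C -> C) (M N : C -> R) : Prop :=
  C2c_on Om h /\ C2_on Om M /\ C2_on Om N /\
  (forall z, Om z -> h z <> 0) /\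
  (forall z, Om z -> dzb h z = 0) /\
  (forall z, Om z -> dzzbR M z = RtoC (Re (h z)) * dzzbR N z) /\
  (forall z, Om z -> dzR M z - RtoC (Re (h z)) * dzR N z <> 0).

From Stdlib Require Import Reals Lra Lia ClassicalEpsilon Classical FunctionalExtensionality.
From Coquelicot Require Import Coquelicot.
Open Scope R_scope.

(* Writing [f_z = (f_u - i f_v) / 2], the equation [M_z = P_z / g + g Q_z] prescribes the partials
   [M_u = a] and [M_v = b] of [M], with [a + i b] built from [2 (P_z / g + g Q_z)]. Holomorphy of [g]
   and of [1/g] (Cauchy-Riemann) together with [Delta P = |g|^2 Delta Q] make the form [a du + b dv]
   closed, hence exact on the simply connected domain: a potential is the integral along a path,
   computed as a sum of local primitives over a fine subdivision, and it does not depend on the path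
   because such sums are invariant under homotopies (via a Lebesgue number of the homotopy square).
   The same identities give [Delta M = 2 Re(1/g) Delta P = Re(h) Delta N]; the displayed formula for
   [M_z - Re(h) N_z] is the algebraic identity [2 Re(1/g) = 1/g + 1/conj g], and it does not vanish
   because [P_z - |g|^2 Q_z] does not. *)

Lemma continuous_C_2d (f : C -> R) z :
  continuous f z <-> continuity_2d_pt (fun x y => f (x, y)) (fst z) (snd z).
Proof.
destruct z as [x y]. rewrite continuity_2d_pt_filterlim.
split; intro H; eapply filterlim_ext; try exact H; intros [u v]; reflexivity.
Qed.

Lemma continuous_pair (f g : R -> R) s :
  continuous f s -> continuous g s -> continuous (fun t => ((f t, g t) : C)) s.
Proof.
intros Hf Hg. eapply filterlim_filter_le_2; [| exact (filterlim_pair f g Hf Hg)].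
intros P [e He]. exists (ball (f s) e) (ball (g s) e); try apply locally_ball.
intros x y Hx Hy. apply He. split; assumption.
Qed.

Lemma continuous_slice_u (f : C -> R) x y :
  continuous f (x, y) -> continuous (fun t => f (t, y)) x.
Proof.
intros Hf. apply (continuous_comp (fun t => (t, y) : C) f); [|exact Hf].
apply continuous_pair; [apply continuous_id | apply continuous_const].
Qed.

Lemma continuous_slice_v (f : C -> R) x y :
  continuous f (x, y) -> continuous (fun t => f (x, t)) y.
Proof.
intros Hf. apply (continuous_comp (fun t => (x, t) : C) f); [|exact Hf].
apply continuous_pair; [apply continuous_const | apply continuous_id].
Qed.

(** * Partial derivatives on C *)

Definition ex_pu (f : C -> R) (z : C) : Prop := ex_derive (fun s => f (s, snd z)) (fst z).
Definition ex_pv (f : C -> R) (z : C) : Prop := ex_derive (fun s => f (fst z, s)) (snd z).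

Lemma Derive_shift0 (h : R -> R) x : Derive (fun t => h (x + t)) 0 = Derive h x.
Proof. unfold Derive. f_equal. apply Lim_ext. intros e. now rewrite Rplus_0_l, Rplus_0_r. Qed.

Lemma ex_derive_shift0 (h : R -> R) x : ex_derive (fun t => h (x + t)) 0 <-> ex_derive h x.
Proof.
split; intros H.
- apply (ex_derive_ext (fun s => h (x + (s - x)))); [intros s; f_equal; ring|].
  apply (ex_derive_comp (fun t => h (x + t)) (fun s => s - x)); [now rewrite Rminus_diag|].
  auto_derive; auto.
- apply (ex_derive_comp h (fun t => x + t)); [now rewrite Rplus_0_r | auto_derive; auto].
Qed.

Lemma pu_Derive f z : pu f z = Derive (fun s => f (s, snd z)) (fst z).
Proof. apply (Derive_shift0 (fun s => f (s, snd z))). Qed.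
Lemma pv_Derive f z : pv f z = Derive (fun s => f (fst z, s)) (snd z).
Proof. apply (Derive_shift0 (fun s => f (fst z, s))). Qed.
Lemma pu_fun f : pu f = fun z => Derive (fun s => f (s, snd z)) (fst z).
Proof. apply functional_extensionality. intros z. apply pu_Derive. Qed.
Lemma pv_fun f : pv f = fun z => Derive (fun s => f (fst z, s)) (snd z).
Proof. apply functional_extensionality. intros z. apply pv_Derive. Qed.
Lemma ex_pu_shift0 f z : ex_derive (fun t => f (fst z + t, snd z)) 0 <-> ex_pu f z.
Proof. apply (ex_derive_shift0 (fun s => f (s, snd z))). Qed.
Lemma ex_pv_shift0 f z : ex_derive (fun t => f (fst z, snd z + t)) 0 <-> ex_pv f z.
Proof. apply (ex_derive_shift0 (fun s => f (fst z, s))). Qed.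

Lemma pu_plus f g z : ex_pu f z -> ex_pu g z -> pu (fun w => f w + g w) z = pu f z + pu g z.
Proof. intros. rewrite !pu_Derive. now apply (Derive_plus (fun s => f (s, snd z)) (fun s => g (s, snd z))). Qed.
Lemma pv_plus f g z : ex_pv f z -> ex_pv g z -> pv (fun w => f w + g w) z = pv f z + pv g z.
Proof. intros. rewrite !pv_Derive. now apply (Derive_plus (fun s => f (fst z, s)) (fun s => g (fst z, s))). Qed.
Lemma pu_minus f g z : ex_pu f z -> ex_pu g z -> pu (fun w => f w - g w) z = pu f z - pu g z.
Proof. intros. rewrite !pu_Derive. now apply (Derive_minus (fun s => f (s, snd z)) (fun s => g (s, snd z))). Qed.
Lemma pv_minus f g z : ex_pv f z -> ex_pv g z -> pv (fun w => f w - g w) z = pv f z - pv g z.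
Proof. intros. rewrite !pv_Derive. now apply (Derive_minus (fun s => f (fst z, s)) (fun s => g (fst z, s))). Qed.
Lemma pu_mult f g z : ex_pu f z -> ex_pu g z -> pu (fun w => f w * g w) z = pu f z * g z + f z * pu g z.
Proof. intros. rewrite !pu_Derive, (Derive_mult (fun s => f (s, snd z)) (fun s => g (s, snd z))); auto. now destruct z. Qed.
Lemma pv_mult f g z : ex_pv f z -> ex_pv g z -> pv (fun w => f w * g w) z = pv f z * g z + f z * pv g z.
Proof. intros. rewrite !pv_Derive, (Derive_mult (fun s => f (fst z, s)) (fun s => g (fst z, s))); auto. now destruct z. Qed.
Lemma pu_inv f z : ex_pu f z -> f z <> 0 -> pu (fun w => / f w) z = - pu f z / f z ^ 2.
Proof. intros. rewrite !pu_Derive, (Derive_inv (fun s => f (s, snd z))); destruct z; auto. Qed.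
Lemma pv_inv f z : ex_pv f z -> f z <> 0 -> pv (fun w => / f w) z = - pv f z / f z ^ 2.
Proof. intros. rewrite !pv_Derive, (Derive_inv (fun s => f (fst z, s))); destruct z; auto. Qed.
Lemma pu_const c z : pu (fun _ => c) z = 0.
Proof. rewrite pu_Derive. apply Derive_const. Qed.
Lemma pv_const c z : pv (fun _ => c) z = 0.
Proof. rewrite pv_Derive. apply Derive_const. Qed.
Lemma pu_scal c f z : pu (fun w => c * f w) z = c * pu f z.
Proof. rewrite !pu_Derive. apply (Derive_scal (fun s => f (s, snd z))). Qed.
Lemma pv_scal c f z : pv (fun w => c * f w) z = c * pv f z.
Proof. rewrite !pv_Derive. apply (Derive_scal (fun s => f (fst z, s))). Qed.
Lemma pu_fun_scal c f : pu (fun w => c * f w) = fun w => c * pu f w.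
Proof. apply functional_extensionality. intros z. apply pu_scal. Qed.
Lemma pv_fun_scal c f : pv (fun w => c * f w) = fun w => c * pv f w.
Proof. apply functional_extensionality. intros z. apply pv_scal. Qed.
Lemma pu_opp f z : pu (fun w => - f w) z = - pu f z.
Proof. rewrite !pu_Derive. apply (Derive_opp (fun s => f (s, snd z))). Qed.
Lemma pv_opp f z : pv (fun w => - f w) z = - pv f z.
Proof. rewrite !pv_Derive. apply (Derive_opp (fun s => f (fst z, s))). Qed.

Lemma ex_pu_plus f g z : ex_pu f z -> ex_pu g z -> ex_pu (fun w => f w + g w) z.
Proof. apply (ex_derive_plus (fun s => f (s, snd z)) (fun s => g (s, snd z))). Qed.
Lemma ex_pv_plus f g z : ex_pv f z -> ex_pv g z -> ex_pv (fun w => f w + g w) z.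
Proof. apply (ex_derive_plus (fun s => f (fst z, s)) (fun s => g (fst z, s))). Qed.
Lemma ex_pu_mult f g z : ex_pu f z -> ex_pu g z -> ex_pu (fun w => f w * g w) z.
Proof. apply (ex_derive_mult (fun s => f (s, snd z)) (fun s => g (s, snd z))). Qed.
Lemma ex_pv_mult f g z : ex_pv f z -> ex_pv g z -> ex_pv (fun w => f w * g w) z.
Proof. apply (ex_derive_mult (fun s => f (fst z, s)) (fun s => g (fst z, s))). Qed.
Lemma ex_pu_inv f z : ex_pu f z -> f z <> 0 -> ex_pu (fun w => / f w) z.
Proof. intros. apply (ex_derive_inv (fun s => f (s, snd z))); destruct z; auto. Qed.
Lemma ex_pv_inv f z : ex_pv f z -> f z <> 0 -> ex_pv (fun w => / f w) z.
Proof. intros. apply (ex_derive_inv (fun s => f (fst z, s))); destruct z; auto. Qed.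
Lemma ex_pu_opp f z : ex_pu f z -> ex_pu (fun w => - f w) z.
Proof. apply (ex_derive_opp (fun s => f (s, snd z))). Qed.
Lemma ex_pv_opp f z : ex_pv f z -> ex_pv (fun w => - f w) z.
Proof. apply (ex_derive_opp (fun s => f (fst z, s))). Qed.
Lemma ex_pu_const c z : ex_pu (fun _ => c) z.
Proof. exact (ex_derive_const (K:=R_AbsRing) (V:=R_NormedModule) c (fst z)). Qed.
Lemma ex_pv_const c z : ex_pv (fun _ => c) z.
Proof. exact (ex_derive_const (K:=R_AbsRing) (V:=R_NormedModule) c (snd z)). Qed.

(* [square c r] is definitionally Coquelicot's [ball c r] on [C]. *)
Definition square (c : C) (r : R) (w : C) : Prop :=
  Rabs (fst w - fst c) < r /\ Rabs (snd w - snd c) < r.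

Lemma square_center c r : 0 < r -> square c r c.
Proof. intros Hr. split; rewrite Rminus_diag, Rabs_R0; exact Hr. Qed.

Lemma open_square (Om : C -> Prop) z :
  open Om -> Om z -> exists r, 0 < r /\ forall w, square z r w -> Om w.
Proof. intros Hop Hz. destruct (Hop z Hz) as [r Hr]. exists r. split; [apply cond_pos | exact Hr]. Qed.

Lemma locally_Rabs_lt w c r : Rabs (w - c) < r -> locally w (fun s => Rabs (s - c) < r).
Proof.
intros Hw. assert (Hp : 0 < r - Rabs (w - c)) by lra.
exists (mkposreal _ Hp). intros s Hs. change (Rabs (s - w) < r - Rabs (w - c)) in Hs.
replace (s - c) with ((s - w) + (w - c)) by ring.
eapply Rle_lt_trans; [apply Rabs_triang | lra].
Qed.

Section C1Calculus.
Variable Om : C -> Prop.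
Hypothesis Om_open : open Om.

Lemma locally_slice_u (f g : C -> R) z : (forall w, Om w -> f w = g w) -> Om z ->
  locally (fst z) (fun s => f (s, snd z) = g (s, snd z)).
Proof.
intros H Hz. destruct (open_square Om z Om_open Hz) as [r [Hr HO]].
apply (filter_imp (fun s => Rabs (s - fst z) < r)).
- intros s Hs. apply H, HO. split; [exact Hs | apply (square_center z r Hr)].
- apply locally_Rabs_lt. apply (square_center z r Hr).
Qed.

Lemma locally_slice_v (f g : C -> R) z : (forall w, Om w -> f w = g w) -> Om z ->
  locally (snd z) (fun s => f (fst z, s) = g (fst z, s)).
Proof.
intros H Hz. destruct (open_square Om z Om_open Hz) as [r [Hr HO]].
apply (filter_imp (fun s => Rabs (s - snd z) < r)).
- intros s Hs. apply H, HO. split; [apply (square_center z r Hr) | exact Hs].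
- apply locally_Rabs_lt. apply (square_center z r Hr).
Qed.

Lemma pu_ext_on (f g : C -> R) z : (forall w, Om w -> f w = g w) -> Om z -> pu f z = pu g z.
Proof. intros. rewrite !pu_Derive. apply Derive_ext_loc, locally_slice_u; auto. Qed.
Lemma pv_ext_on (f g : C -> R) z : (forall w, Om w -> f w = g w) -> Om z -> pv f z = pv g z.
Proof. intros. rewrite !pv_Derive. apply Derive_ext_loc, locally_slice_v; auto. Qed.

Lemma continuous_ext_on (f g : C -> R) z :
  (forall w, Om w -> f w = g w) -> Om z -> continuous f z -> continuous g z.
Proof.
intros H Hz Hf. apply (continuous_ext_loc g f); auto.
apply (filter_imp Om); [intros; apply H; auto | apply Om_open; auto].
Qed.

Lemma C1_continuous f z : C1_on Om f -> Om z -> continuous f z.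
Proof. intros Hf Hz. apply (Hf z Hz). Qed.
Lemma C1_ex_pu f z : C1_on Om f -> Om z -> ex_pu f z.
Proof. intros Hf Hz. apply ex_pu_shift0, (Hf z Hz). Qed.
Lemma C1_ex_pv f z : C1_on Om f -> Om z -> ex_pv f z.
Proof. intros Hf Hz. apply ex_pv_shift0, (Hf z Hz). Qed.
Lemma C1_continuous_pu f z : C1_on Om f -> Om z -> continuous (pu f) z.
Proof. intros Hf Hz. apply (Hf z Hz). Qed.
Lemma C1_continuous_pv f z : C1_on Om f -> Om z -> continuous (pv f) z.
Proof. intros Hf Hz. apply (Hf z Hz). Qed.

Lemma C1_on_intro f :
  (forall z, Om z -> continuous f z) ->
  (forall z, Om z -> ex_pu f z) -> (forall z, Om z -> ex_pv f z) ->
  (forall z, Om z -> continuous (pu f) z) -> (forall z, Om z -> continuous (pv f) z) ->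
  C1_on Om f.
Proof. intros H1 H2 H3 H4 H5 z Hz. repeat split; auto; [apply ex_pu_shift0 | apply ex_pv_shift0]; auto. Qed.

Lemma C1_on_ext f g : (forall w, Om w -> f w = g w) -> C1_on Om f -> C1_on Om g.
Proof.
intros H Hf. assert (Hpu := pu_ext_on f g). assert (Hpv := pv_ext_on f g).
apply C1_on_intro; intros z Hz.
- apply (continuous_ext_on f); auto using C1_continuous.
- apply (ex_derive_ext_loc (fun s => f (s, snd z))); [apply locally_slice_u | apply C1_ex_pu]; auto.
- apply (ex_derive_ext_loc (fun s => f (fst z, s))); [apply locally_slice_v | apply C1_ex_pv]; auto.
- apply (continuous_ext_on (pu f)); auto using C1_continuous_pu.
- apply (continuous_ext_on (pv f)); auto using C1_continuous_pv.
Qed.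

Lemma C1_on_const c : C1_on Om (fun _ => c).
Proof.
apply C1_on_intro; intros z Hz; auto using ex_pu_const, ex_pv_const.
- apply continuous_const.
- apply (continuous_ext (fun _ => 0)); [intros; symmetry; apply pu_const | apply continuous_const].
- apply (continuous_ext (fun _ => 0)); [intros; symmetry; apply pv_const | apply continuous_const].
Qed.

Lemma C1_on_plus f g : C1_on Om f -> C1_on Om g -> C1_on Om (fun w => f w + g w).
Proof.
intros Hf Hg. apply C1_on_intro; intros z Hz.
- apply (continuous_plus f g); auto using C1_continuous.
- apply ex_pu_plus; auto using C1_ex_pu.
- apply ex_pv_plus; auto using C1_ex_pv.
- apply (continuous_ext_on (fun w => pu f w + pu g w)); auto.
  + intros w Hw. symmetry; apply pu_plus; auto using C1_ex_pu.
  + apply (continuous_plus (pu f) (pu g)); auto using C1_continuous_pu.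
- apply (continuous_ext_on (fun w => pv f w + pv g w)); auto.
  + intros w Hw. symmetry; apply pv_plus; auto using C1_ex_pv.
  + apply (continuous_plus (pv f) (pv g)); auto using C1_continuous_pv.
Qed.

Lemma C1_on_mult f g : C1_on Om f -> C1_on Om g -> C1_on Om (fun w => f w * g w).
Proof.
intros Hf Hg. apply C1_on_intro; intros z Hz.
- apply (continuous_mult f g); auto using C1_continuous.
- apply ex_pu_mult; auto using C1_ex_pu.
- apply ex_pv_mult; auto using C1_ex_pv.
- apply (continuous_ext_on (fun w => pu f w * g w + f w * pu g w)); auto.
  + intros w Hw. symmetry; apply pu_mult; auto using C1_ex_pu.
  + apply (continuous_plus (fun w => pu f w * g w) (fun w => f w * pu g w));
      [apply (continuous_mult (pu f) g) | apply (continuous_mult f (pu g))];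
      auto using C1_continuous, C1_continuous_pu.
- apply (continuous_ext_on (fun w => pv f w * g w + f w * pv g w)); auto.
  + intros w Hw. symmetry; apply pv_mult; auto using C1_ex_pv.
  + apply (continuous_plus (fun w => pv f w * g w) (fun w => f w * pv g w));
      [apply (continuous_mult (pv f) g) | apply (continuous_mult f (pv g))];
      auto using C1_continuous, C1_continuous_pv.
Qed.

Lemma C1_on_opp f : C1_on Om f -> C1_on Om (fun w => - f w).
Proof.
intros Hf. apply (C1_on_ext (fun w => (-1) * f w)); [intros; ring|].
apply C1_on_mult; auto using C1_on_const.
Qed.

Lemma C1_on_minus f g : C1_on Om f -> C1_on Om g -> C1_on Om (fun w => f w - g w).
Proof. intros Hf Hg. apply (C1_on_plus f (fun w => - g w)); auto using C1_on_opp. Qed.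

Lemma C1_on_inv f : C1_on Om f -> (forall w, Om w -> f w <> 0) -> C1_on Om (fun w => / f w).
Proof.
intros Hf Hn.
assert (Cinv : forall z, Om z -> continuous (fun w => / f w) z).
{ intros z Hz. apply (continuous_comp f Rinv); [apply C1_continuous; auto | apply continuous_Rinv; auto]. }
assert (Cm : forall h z, Om z -> continuous h z -> continuous (fun w => - h w * (/ f w * / f w)) z).
{ intros h z Hz Hh. apply (continuous_mult (fun w => - h w) (fun w => / f w * / f w)).
  - apply (continuous_opp h); exact Hh.
  - apply (continuous_mult (fun w => / f w) (fun w => / f w)); auto. }
apply C1_on_intro; intros z Hz; auto.
- apply ex_pu_inv; auto using C1_ex_pu.
- apply ex_pv_inv; auto using C1_ex_pv.
- apply (continuous_ext_on (fun w => - pu f w * (/ f w * / f w))); auto using C1_continuous_pu.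
  intros w Hw. rewrite pu_inv; auto using C1_ex_pu. field. auto.
- apply (continuous_ext_on (fun w => - pv f w * (/ f w * / f w))); auto using C1_continuous_pv.
  intros w Hw. rewrite pv_inv; auto using C1_ex_pv. field. auto.
Qed.

Lemma C2_C1 f : C2_on Om f -> C1_on Om f.
Proof. intros [H _]; exact H. Qed.
Lemma C2_pu f : C2_on Om f -> C1_on Om (pu f).
Proof. intros [_ [H _]]; exact H. Qed.
Lemma C2_pv f : C2_on Om f -> C1_on Om (pv f).
Proof. intros [_ [_ H]]; exact H. Qed.

Lemma C2_on_ext f g : (forall w, Om w -> f w = g w) -> C2_on Om f -> C2_on Om g.
Proof.
intros H [H1 [H2 H3]]. split; [|split].
- eapply C1_on_ext; eauto.
- apply (C1_on_ext (pu f)); auto. intros; apply pu_ext_on; auto.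
- apply (C1_on_ext (pv f)); auto. intros; apply pv_ext_on; auto.
Qed.

Lemma C2_on_const c : C2_on Om (fun _ => c).
Proof.
split; [|split]; [apply C1_on_const | apply (C1_on_ext (fun _ => 0)) | apply (C1_on_ext (fun _ => 0))];
  auto using C1_on_const; intros; symmetry; [apply pu_const | apply pv_const].
Qed.

Lemma C2_on_plus f g : C2_on Om f -> C2_on Om g -> C2_on Om (fun w => f w + g w).
Proof.
intros Hf Hg. split; [|split].
- apply C1_on_plus; apply C2_C1; auto.
- apply (C1_on_ext (fun w => pu f w + pu g w)); [|apply C1_on_plus; apply C2_pu; auto].
  intros w Hw. symmetry; apply pu_plus; apply C1_ex_pu; auto using C2_C1.
- apply (C1_on_ext (fun w => pv f w + pv g w)); [|apply C1_on_plus; apply C2_pv; auto].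
  intros w Hw. symmetry; apply pv_plus; apply C1_ex_pv; auto using C2_C1.
Qed.

Lemma C2_on_mult f g : C2_on Om f -> C2_on Om g -> C2_on Om (fun w => f w * g w).
Proof.
intros Hf Hg. split; [|split].
- apply C1_on_mult; apply C2_C1; auto.
- apply (C1_on_ext (fun w => pu f w * g w + f w * pu g w)).
  + intros w Hw. symmetry; apply pu_mult; apply C1_ex_pu; auto using C2_C1.
  + apply C1_on_plus; apply C1_on_mult; auto using C2_pu, C2_C1.
- apply (C1_on_ext (fun w => pv f w * g w + f w * pv g w)).
  + intros w Hw. symmetry; apply pv_mult; apply C1_ex_pv; auto using C2_C1.
  + apply C1_on_plus; apply C1_on_mult; auto using C2_pv, C2_C1.
Qed.

Lemma C2_on_inv f : C2_on Om f -> (forall w, Om w -> f w <> 0) -> C2_on Om (fun w => / f w).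
Proof.
intros Hf Hn. split; [|split].
- apply C1_on_inv; auto using C2_C1.
- apply (C1_on_ext (fun w => (-1) * pu f w * (/ f w * / f w))).
  + intros w Hw. rewrite pu_inv; auto using C1_ex_pu, C2_C1. field. auto.
  + apply C1_on_mult; [apply C1_on_mult | apply C1_on_mult; apply C1_on_inv];
      auto using C1_on_const, C2_pu, C2_C1.
- apply (C1_on_ext (fun w => (-1) * pv f w * (/ f w * / f w))).
  + intros w Hw. rewrite pv_inv; auto using C1_ex_pv, C2_C1. field. auto.
  + apply C1_on_mult; [apply C1_on_mult | apply C1_on_mult; apply C1_on_inv];
      auto using C1_on_const, C2_pv, C2_C1.
Qed.

Lemma C2_on_opp f : C2_on Om f -> C2_on Om (fun w => - f w).
Proof.
intros Hf. apply (C2_on_ext (fun w => (-1) * f w)); [intros; ring|].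
apply C2_on_mult; auto using C2_on_const.
Qed.

Lemma schwarz_on f z : C2_on Om f -> Om z -> pu (pv f) z = pv (pu f) z.
Proof.
intros Hf Hz.
assert (Cuv := C1_continuous_pu _ z (C2_pv f Hf) Hz).
assert (Cvu := C1_continuous_pv _ z (C2_pu f Hf) Hz).
assert (Euv := fun w => C1_ex_pu _ w (C2_pv f Hf)).
assert (Evu := fun w => C1_ex_pv _ w (C2_pu f Hf)).
destruct (open_square Om z Om_open Hz) as [r [Hr HO]].
apply continuous_C_2d in Cuv. apply continuous_C_2d in Cvu.
unfold ex_pu, ex_pv in *. rewrite !pu_fun, !pv_fun in *.
destruct z as [z1 z2]. simpl in *.
apply (Schwarz (fun x y => f (x, y))); [| exact Cuv | exact Cvu].
exists (mkposreal r Hr). intros u v Hu Hv.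
assert (Hw : Om (u, v)) by (apply HO; split; assumption).
repeat split.
- exact (C1_ex_pu f (u, v) (C2_C1 f Hf) Hw).
- exact (C1_ex_pv f (u, v) (C2_C1 f Hf) Hw).
- exact (Euv (u, v) Hw).
- exact (Evu (u, v) Hw).
Qed.

End C1Calculus.

Lemma Rabs_lt_between x w c r t :
  Rabs (x - c) < r -> Rabs (w - c) < r -> Rmin x w <= t <= Rmax x w -> Rabs (t - c) < r.
Proof.
unfold Rmin, Rmax. intros H1 H2 H3. apply Rabs_def2 in H1. apply Rabs_def2 in H2.
apply Rabs_def1; destruct (Rle_dec x w); lra.
Qed.

Lemma eq_of_derive_zero (f : R -> R) x y :
  (forall t, Rmin x y <= t <= Rmax x y -> is_derive f t 0) -> f x = f y.
Proof.
intros H. destruct (MVT_gen f x y (fun _ => 0)) as [c [_ Hc]]; [| |lra].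
- intros t Ht. apply H. lra.
- intros t Ht. apply continuity_pt_filterlim, (ex_derive_continuous (K:=R_AbsRing) (V:=R_NormedModule)).
  exists 0. apply H, Ht.
Qed.

Lemma Rabs_sub_le_of_derive_bound (h dh : R -> R) x y B :
  (forall t, Rmin x y <= t <= Rmax x y -> is_derive h t (dh t) /\ Rabs (dh t) <= B) ->
  Rabs (h y - h x) <= B * Rabs (y - x).
Proof.
intros H. destruct (MVT_gen h x y dh) as [c [Hc E]].
- intros t Ht. apply H. lra.
- intros t Ht. apply continuity_pt_filterlim, (ex_derive_continuous (K:=R_AbsRing) (V:=R_NormedModule)).
  exists (dh t). apply H, Ht.
- rewrite E, Rabs_mult. apply Rmult_le_compat_r; [apply Rabs_pos | apply H, Hc].
Qed.

Lemma continuous_of_bounded_partials (f du dv : C -> R) c r B : 0 < r ->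
  (forall w, square c r w ->
     is_derive (fun s => f (s, snd w)) (fst w) (du w) /\ is_derive (fun s => f (fst w, s)) (snd w) (dv w)) ->
  (forall w, square c r w -> Rabs (du w) <= B /\ Rabs (dv w) <= B) ->
  continuous f c.
Proof.
intros Hr HD HB. apply continuous_C_2d. destruct c as [c1 c2]. simpl. intros eps.
assert (HB0 : 0 <= B).
{ destruct (HB (c1, c2) (square_center _ _ Hr)) as [H _]. pose proof (Rabs_pos (du (c1, c2))). lra. }
assert (Hd : 0 < Rmin r (eps / (2 * B + 1))).
{ apply Rmin_pos; [lra | apply Rdiv_lt_0_compat; [apply cond_pos | lra]]. }
exists (mkposreal _ Hd). simpl. intros u v Hu Hv.
assert (M1 := Rmin_l r (eps / (2 * B + 1))). assert (M2 := Rmin_r r (eps / (2 * B + 1))).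
assert (Ev : Rabs (f (u, v) - f (u, c2)) <= B * Rabs (v - c2)).
{ apply (Rabs_sub_le_of_derive_bound (fun s => f (u, s)) (fun s => dv (u, s))). intros t Ht.
  assert (Sq : square (c1, c2) r (u, t)).
  { split; simpl; [lra|]. eapply Rabs_lt_between; [| |exact Ht]; rewrite ?Rminus_diag, ?Rabs_R0; lra. }
  split; [apply (HD _ Sq) | apply (HB _ Sq)]. }
assert (Eu : Rabs (f (u, c2) - f (c1, c2)) <= B * Rabs (u - c1)).
{ apply (Rabs_sub_le_of_derive_bound (fun s => f (s, c2)) (fun s => du (s, c2))). intros t Ht.
  assert (Sq : square (c1, c2) r (t, c2)).
  { split; simpl; [|rewrite Rminus_diag, Rabs_R0; lra].
    eapply Rabs_lt_between; [| |exact Ht]; rewrite ?Rminus_diag, ?Rabs_R0; lra. }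
  split; [apply (HD _ Sq) | apply (HB _ Sq)]. }
replace (f (u, v) - f (c1, c2)) with ((f (u, v) - f (u, c2)) + (f (u, c2) - f (c1, c2))) by ring.
eapply Rle_lt_trans; [apply Rabs_triang|].
apply Rle_lt_trans with (B * (eps / (2 * B + 1)) + B * (eps / (2 * B + 1))).
- apply Rle_trans with (B * Rabs (v - c2) + B * Rabs (u - c1)); [lra|].
  apply Rplus_le_compat; apply Rmult_le_compat_l; lra.
- replace (B * (eps / (2 * B + 1)) + B * (eps / (2 * B + 1))) with (eps * (2 * B / (2 * B + 1)))
    by (field; lra).
  rewrite <- (Rmult_1_r eps) at 2. apply Rmult_lt_compat_l; [apply cond_pos|].
  apply Rmult_lt_reg_r with (2 * B + 1); [lra|]. unfold Rdiv. rewrite Rmult_assoc, Rinv_l by lra. lra.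
Qed.

Lemma continuous_locally_bounded (f : C -> R) z : continuous f z ->
  exists r, 0 < r /\ forall w, square z r w -> Rabs (f w) <= Rabs (f z) + 1.
Proof.
intros Hf. unfold continuous in Hf. rewrite filterlim_locally in Hf.
destruct (Hf (mkposreal 1 Rlt_0_1)) as [r Hr]. exists r. split; [apply cond_pos|].
intros w Hw. assert (Hd : Rabs (f w - f z) < 1) by exact (Hr w Hw).
pose proof (Rabs_triang_inv (f w) (f z)). lra.
Qed.

(** * Lebesgue numbers of homotopy squares *)

Definition lebesgue_number (Om : C -> Prop) (H : R * R -> C) (x y d eta : R) : Prop :=
  0 < eta /\ forall p1 p2, x <= p1 <= x + d -> y <= p2 <= y + d ->
    exists c r, 0 < r /\ (forall w, square c r w -> Om w) /\
      forall q1 q2, Rabs (q1 - p1) < eta -> Rabs (q2 - p2) < eta -> square c r (H (q1, q2)).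

Definition has_lebesgue_number Om H x y d : Prop := exists eta, lebesgue_number Om H x y d eta.

Lemma has_lebesgue_number_quarters Om H x y d :
  has_lebesgue_number Om H x y (d / 2) -> has_lebesgue_number Om H (x + d / 2) y (d / 2) ->
  has_lebesgue_number Om H x (y + d / 2) (d / 2) -> has_lebesgue_number Om H (x + d / 2) (y + d / 2) (d / 2) ->
  has_lebesgue_number Om H x y d.
Proof.
intros [e1 [He1 G1]] [e2 [He2 G2]] [e3 [He3 G3]] [e4 [He4 G4]].
set (m := Rmin (Rmin e1 e2) (Rmin e3 e4)).
assert (M1 := Rmin_l (Rmin e1 e2) (Rmin e3 e4)). assert (M2 := Rmin_r (Rmin e1 e2) (Rmin e3 e4)).
assert (M3 := Rmin_l e1 e2). assert (M4 := Rmin_r e1 e2).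
assert (M5 := Rmin_l e3 e4). assert (M6 := Rmin_r e3 e4). fold m in M1, M2.
assert (Shrink : forall e p1 p2, m <= e ->
  (exists c r, 0 < r /\ (forall w, square c r w -> Om w) /\
     forall q1 q2, Rabs (q1 - p1) < e -> Rabs (q2 - p2) < e -> square c r (H (q1, q2))) ->
  exists c r, 0 < r /\ (forall w, square c r w -> Om w) /\
     forall q1 q2, Rabs (q1 - p1) < m -> Rabs (q2 - p2) < m -> square c r (H (q1, q2))).
{ intros e p1 p2 Hme [c [r [Hr [HO Hq]]]]. exists c, r. split; [exact Hr|]. split; [exact HO|].
  intros q1 q2 Hq1 Hq2. apply Hq; lra. }
exists m. split; [unfold m; repeat apply Rmin_pos; auto|].
intros p1 p2 Hp1 Hp2.
destruct (Rle_dec p1 (x + d / 2)), (Rle_dec p2 (y + d / 2)).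
- apply (Shrink e1); [lra | apply G1; lra].
- apply (Shrink e3); [lra | apply G3; lra].
- apply (Shrink e2); [lra | apply G2; lra].
- apply (Shrink e4); [lra | apply G4; lra].
Qed.

Lemma has_lebesgue_number_near Om H px py : open Om -> continuous H (px, py) -> Om (H (px, py)) ->
  exists eps, 0 < eps /\ forall x y d, 0 < d < eps -> x <= px <= x + d -> y <= py <= y + d ->
    has_lebesgue_number Om H x y d.
Proof.
intros Hop Hc HOm. destruct (Hop _ HOm) as [r Hr].
unfold continuous in Hc. rewrite filterlim_locally in Hc. destruct (Hc r) as [del Hdel].
assert (Hdel2 : 0 < del / 2) by (destruct del; simpl; lra).
exists (del / 2). split; [exact Hdel2|].
intros x y d Hd Hx Hy. exists (del / 2). split; [exact Hdel2|].
intros p1 p2 Hp1 Hp2. exists (H (px, py)), r. split; [apply cond_pos|]. split; [exact Hr|].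
intros q1 q2 Hq1 Hq2. apply (Hdel (q1, q2)). split; simpl.
- change (Rabs (q1 - px) < del). apply Rabs_def1; apply Rabs_def2 in Hq1; lra.
- change (Rabs (q2 - py) < del). apply Rabs_def1; apply Rabs_def2 in Hq2; lra.
Qed.

Lemma nested_intervals (X D : nat -> R) :
  (forall n, 0 < D n) -> (forall n, X n <= X (S n) /\ X (S n) + D (S n) <= X n + D n) ->
  exists x, forall n, X n <= x <= X n + D n.
Proof.
intros Dpos Nest.
assert (Mono : forall n k, X n <= X (n + k)%nat /\ X (n + k)%nat + D (n + k)%nat <= X n + D n).
{ intros n k. induction k; [rewrite Nat.add_0_r; lra|].
  rewrite Nat.add_succ_r. destruct (Nest (n + k)%nat). lra. }
assert (Bound : forall n m, X m <= X n + D n).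
{ intros n m. destruct (Nat.le_ge_cases n m) as [Hnm|Hnm].
  - destruct (Mono n (m - n)%nat) as [_ I]. replace (n + (m - n))%nat with m in I by lia.
    pose proof (Dpos m). lra.
  - destruct (Mono m (n - m)%nat) as [I _]. replace (m + (n - m))%nat with n in I by lia.
    pose proof (Dpos n). lra. }
destruct (completeness (fun v => exists n, v = X n)) as [x [Hub Hlub]].
- exists (X 0%nat + D 0%nat). intros v [n ->]. apply Bound.
- exists (X 0%nat). exists 0%nat. reflexivity.
- exists x. intros n. split.
  + apply Hub. exists n. reflexivity.
  + apply Hlub. intros v [m ->]. apply Bound.
Qed.

Definition bad_quarter (Om : C -> Prop) (H : R * R -> C) (s : R * R * R) : R * R * R :=
  let '(x, y, d) := s in
  if excluded_middle_informative (has_lebesgue_number Om H x y (d / 2)) then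
    if excluded_middle_informative (has_lebesgue_number Om H (x + d / 2) y (d / 2)) then
      if excluded_middle_informative (has_lebesgue_number Om H x (y + d / 2) (d / 2))
      then (x + d / 2, y + d / 2, d / 2)
      else (x, y + d / 2, d / 2)
    else (x + d / 2, y, d / 2)
  else (x, y, d / 2).

Lemma bad_quarter_spec Om H x y d : 0 <= d -> ~ has_lebesgue_number Om H x y d ->
  let '(x', y', d') := bad_quarter Om H (x, y, d) in
  ~ has_lebesgue_number Om H x' y' d' /\ d' = d / 2 /\
  x <= x' /\ x' + d' <= x + d /\ y <= y' /\ y' + d' <= y + d.
Proof.
intros Hd Hbad. unfold bad_quarter.
repeat destruct excluded_middle_informative; repeat split; auto; try lra.
intros G4. apply Hbad, has_lebesgue_number_quarters; auto.
Qed.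

Fixpoint bisection Om H (n : nat) : R * R * R :=
  match n with O => (0, 0, 1) | S n => bad_quarter Om H (bisection Om H n) end.

Lemma bisection_bad Om H n : ~ has_lebesgue_number Om H 0 0 1 ->
  let '(x, y, d) := bisection Om H n in ~ has_lebesgue_number Om H x y d /\ d = / 2 ^ n.
Proof.
intros Hbad. induction n as [|n IH]; simpl; [split; [exact Hbad | field]|].
destruct (bisection Om H n) as [[x y] d]. destruct IH as [IH ->].
assert (Hd : 0 <= / 2 ^ n) by (left; apply Rinv_0_lt_compat, pow_lt; lra).
generalize (bad_quarter_spec Om H x y _ Hd IH).
destruct (bad_quarter Om H (x, y, / 2 ^ n)) as [[x' y'] d']. intros [B [-> _]].
split; [exact B | field; apply pow_nonzero; lra].
Qed.

Lemma INR_succ_le_pow2 n : INR n + 1 <= 2 ^ n.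
Proof. induction n as [|n IH]; [simpl; lra | rewrite S_INR; simpl; pose proof (pos_INR n); lra]. Qed.

Lemma inv_pow2_lt eps : 0 < eps -> exists n, / 2 ^ n < eps.
Proof.
intros He. destruct (archimed_cor1 eps He) as [n [Hn Hn0]]. exists n.
eapply Rlt_trans; [|exact Hn]. apply Rinv_lt_contravar; [|pose proof (INR_succ_le_pow2 n); lra].
apply Rmult_lt_0_compat; [apply lt_0_INR; exact Hn0 | apply pow_lt; lra].
Qed.

(* A bad square would yield, by repeated bisection, bad squares shrinking to a point whose
   neighbourhood has a Lebesgue number by continuity. *)
Lemma has_lebesgue_number_unit_square Om H : open Om -> (forall p, continuous H p) ->
  (forall s t, 0 <= s <= 1 -> 0 <= t <= 1 -> Om (H (s, t))) -> has_lebesgue_number Om H 0 0 1.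
Proof.
intros Hop Hc HOm. apply NNPP. intros Hbad.
set (X n := fst (fst (bisection Om H n))). set (Y n := snd (fst (bisection Om H n))).
assert (Spec : forall n, ~ has_lebesgue_number Om H (X n) (Y n) (/ 2 ^ n) /\
  X n <= X (S n) /\ X (S n) + / 2 ^ S n <= X n + / 2 ^ n /\
  Y n <= Y (S n) /\ Y (S n) + / 2 ^ S n <= Y n + / 2 ^ n).
{ intros n. assert (B := bisection_bad Om H n Hbad). assert (B' := bisection_bad Om H (S n) Hbad).
  unfold X, Y. simpl bisection in B' |- *. destruct (bisection Om H n) as [[x y] d].
  destruct B as [B ->].
  assert (Hd : 0 <= / 2 ^ n) by (left; apply Rinv_0_lt_compat, pow_lt; lra).
  generalize (bad_quarter_spec Om H x y _ Hd B). revert B'.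
  destruct (bad_quarter Om H (x, y, / 2 ^ n)) as [[x' y'] d']. simpl.
  intros [_ ->] [_ [_ N]]. split; [exact B | exact N]. }
assert (Dpos : forall n, 0 < / 2 ^ n) by (intros n; apply Rinv_0_lt_compat, pow_lt; lra).
destruct (nested_intervals X (fun n => / 2 ^ n) Dpos) as [xs Hxs]; [intros n; split; apply (Spec n)|].
destruct (nested_intervals Y (fun n => / 2 ^ n) Dpos) as [ys Hys]; [intros n; split; apply (Spec n)|].
assert (Hx0 := Hxs 0%nat). assert (Hy0 := Hys 0%nat). simpl in Hx0, Hy0.
unfold X, Y in Hx0, Hy0. simpl in Hx0, Hy0. rewrite Rinv_1 in Hx0, Hy0.
destruct (has_lebesgue_number_near Om H xs ys Hop (Hc _) (HOm xs ys ltac:(lra) ltac:(lra)))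
  as [eps [Heps Hnear]].
destruct (inv_pow2_lt eps Heps) as [n Hn].
apply (proj1 (Spec n)), Hnear; auto.
Qed.

(** * Paths and subdivision sums *)

Fixpoint chain_sum (L : C -> C -> R) (f : nat -> C) (k : nat) : R :=
  match k with O => 0 | S k => chain_sum L f k + L (f k) (f (S k)) end.

Definition path_sum (L : C -> C -> R) (g : R -> C) (n : nat) : R :=
  chain_sum L (fun i => g (INR i / INR n)) n.

Lemma chain_sum_ext L f g k : (forall j, (j <= k)%nat -> f j = g j) -> chain_sum L f k = chain_sum L g k.
Proof.
induction k as [|k IH]; intros H; simpl; [reflexivity|].
rewrite IH by (intros; apply H; lia). rewrite !H by lia. reflexivity.
Qed.

Lemma chain_sum_add L f k m : chain_sum L f (k + m) = chain_sum L f k + chain_sum L (fun j => f (k + j)%nat) m.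
Proof.
induction m as [|m IH]; [simpl; rewrite Nat.add_0_r; ring|].
rewrite Nat.add_succ_r. cbn [chain_sum]. rewrite IH, Nat.add_succ_r. ring.
Qed.

Lemma chain_sum_shift L f k : chain_sum L f (S k) = L (f O) (f 1%nat) + chain_sum L (fun i => f (S i)) k.
Proof. induction k as [|k IH]; [simpl; ring|]. cbn [chain_sum] in *. rewrite IH. ring. Qed.

Lemma chain_sum_rev L f m :
  (forall k, (k < m)%nat -> L (f (S k)) (f k) = - L (f k) (f (S k))) ->
  chain_sum L (fun i => f (m - i)%nat) m = - chain_sum L f m.
Proof.
induction m as [|m IH]; intros H; [simpl; ring|].
rewrite chain_sum_shift. replace (S m - 0)%nat with (S m) by lia. replace (S m - 1)%nat with m by lia.
rewrite (chain_sum_ext L (fun i => f (S m - S i)%nat) (fun i => f (m - i)%nat)) by (intros; f_equal; lia).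
rewrite IH by (intros; apply H; lia). cbn [chain_sum]. rewrite H by lia. ring.
Qed.

Lemma INR_div_unit i n : (0 < n)%nat -> (i <= n)%nat -> 0 <= INR i / INR n <= 1.
Proof.
intros Hn Hi. apply lt_0_INR in Hn. apply le_INR in Hi. split.
- apply Rdiv_le_0_compat; [apply pos_INR | exact Hn].
- apply Rmult_le_reg_r with (INR n); [exact Hn|].
  unfold Rdiv. rewrite Rmult_assoc, Rinv_l, Rmult_1_r, Rmult_1_l; lra.
Qed.

(* [g1] followed by [g2] when [g1 1 = z = g2 0]; the two arguments are [2 min(s, 1/2)] and
   [2 max(s, 1/2) - 1]. *)
Definition path_concat (g1 g2 : R -> C) (z : C) (s : R) : C :=
  Cminus (Cplus (g1 (s + / 2 - Rabs (s - / 2))) (g2 (s - / 2 + Rabs (s - / 2)))) z.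

Definition path_rev (g : R -> C) (s : R) : C := g (1 - s).

Definition segment (z w : C) (s : R) : C :=
  (fst z + s * (fst w - fst z), snd z + s * (snd w - snd z)).

Lemma path_concat_l g1 g2 z s : g2 0 = z -> s <= / 2 -> path_concat g1 g2 z s = g1 (2 * s).
Proof.
intros Hz Hs. unfold path_concat. rewrite Rabs_left1 by lra.
replace (s - / 2 + - (s - / 2)) with 0 by ring. rewrite Hz.
replace (s + / 2 - - (s - / 2)) with (2 * s) by ring. ring.
Qed.

Lemma path_concat_r g1 g2 z s : g1 1 = z -> / 2 <= s -> path_concat g1 g2 z s = g2 (2 * s - 1).
Proof.
intros Hz Hs. unfold path_concat. rewrite Rabs_right by lra.
replace (s + / 2 - (s - / 2)) with 1 by field. rewrite Hz.
replace (s - / 2 + (s - / 2)) with (2 * s - 1) by field. ring.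
Qed.

Lemma continuous_path_concat g1 g2 z s : (forall s, continuous g1 s) -> (forall s, continuous g2 s) ->
  continuous (path_concat g1 g2 z) s.
Proof.
intros H1 H2. unfold path_concat.
assert (CA : continuous (fun s => Rabs (s - / 2)) s).
{ apply continuous_Rabs_comp, (continuous_minus (fun s => s) (fun _ => / 2));
    [apply continuous_id | apply continuous_const]. }
apply (continuous_minus (fun s => Cplus (g1 (s + / 2 - Rabs (s - / 2))) (g2 (s - / 2 + Rabs (s - / 2))))
  (fun _ => z)); [|apply continuous_const].
apply (continuous_plus (fun s => g1 (s + / 2 - Rabs (s - / 2))) (fun s => g2 (s - / 2 + Rabs (s - / 2)))).
- apply (continuous_comp (fun s => s + / 2 - Rabs (s - / 2)) g1); [|apply H1].
  apply (continuous_minus (fun s => s + / 2) (fun s => Rabs (s - / 2))); [|exact CA].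
  apply (continuous_plus (fun s => s) (fun _ => / 2)); [apply continuous_id | apply continuous_const].
- apply (continuous_comp (fun s => s - / 2 + Rabs (s - / 2)) g2); [|apply H2].
  apply (continuous_plus (fun s => s - / 2) (fun s => Rabs (s - / 2))); [|exact CA].
  apply (continuous_minus (fun s => s) (fun _ => / 2)); [apply continuous_id | apply continuous_const].
Qed.

Lemma continuous_path_rev g s : (forall s, continuous g s) -> continuous (path_rev g) s.
Proof.
intros H. apply (continuous_comp (fun s => 1 - s) g); [|apply H].
apply (continuous_minus (fun _ => 1) (fun s => s)); [apply continuous_const | apply continuous_id].
Qed.

Lemma continuous_segment z w s : continuous (segment z w) s.
Proof.
assert (Aff : forall c d, continuous (fun s => c + s * d) s).
{ intros c d. apply (continuous_plus (fun _ => c) (fun s => s * d)); [apply continuous_const|].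
  apply (continuous_mult (fun s => s) (fun _ => d)); [apply continuous_id | apply continuous_const]. }
apply continuous_pair; apply Aff.
Qed.

Lemma segment_0 z w : segment z w 0 = z.
Proof. unfold segment. rewrite !Rmult_0_l, !Rplus_0_r. now destruct z. Qed.

Lemma segment_1 z w : segment z w 1 = w.
Proof. unfold segment. destruct z, w; simpl. f_equal; ring. Qed.

Lemma segment_in_square z w r s : square z r w -> 0 <= s <= 1 -> square z r (segment z w s).
Proof.
intros [H1 H2] Hs. unfold segment, square in *; simpl.
replace (fst z + s * (fst w - fst z) - fst z) with (s * (fst w - fst z)) by ring.
replace (snd z + s * (snd w - snd z) - snd z) with (s * (snd w - snd z)) by ring.
rewrite !Rabs_mult, (Rabs_pos_eq s) by lra.
pose proof (Rabs_pos (fst w - fst z)); pose proof (Rabs_pos (snd w - snd z)). split; nra.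
Qed.

Definition path_lebesgue_number (Om : C -> Prop) (g : R -> C) (eta : R) : Prop :=
  0 < eta /\ forall p, 0 <= p <= 1 ->
    exists c r, 0 < r /\ (forall w, square c r w -> Om w) /\ forall q, Rabs (q - p) < eta -> square c r (g q).

Lemma path_lebesgue_number_exists Om g : open Om -> path_in Om g -> exists eta, path_lebesgue_number Om g eta.
Proof.
intros Hop [Hc HOm].
destruct (has_lebesgue_number_unit_square Om (fun p => g (fst p)) Hop) as [eta [He G]].
- intros [s t]. apply (continuous_comp fst g); [apply continuous_fst | apply Hc].
- intros s t Hs Ht. apply HOm, Hs.
- exists eta. split; [exact He|]. intros p Hp. destruct (G p 0) as [c [r [Hr [HO Hq]]]]; try lra.
  exists c, r. split; [exact Hr|]. split; [exact HO|]. intros q Hq'.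
  apply (Hq q 0); [exact Hq' | rewrite Rminus_0_r, Rabs_R0; exact He].
Qed.

Lemma path_in_concat Om g1 g2 z : path_in Om g1 -> path_in Om g2 -> g1 1 = z -> g2 0 = z ->
  path_in Om (path_concat g1 g2 z).
Proof.
intros [C1 O1] [C2 O2] H1 H2. split; [intros s; apply continuous_path_concat; auto|].
intros s Hs. unfold unit_interval in *. destruct (Rle_dec s (/ 2)).
- rewrite path_concat_l by auto. apply O1. unfold unit_interval. lra.
- rewrite path_concat_r by (auto; lra). apply O2. unfold unit_interval. lra.
Qed.

Lemma path_in_rev Om g : path_in Om g -> path_in Om (path_rev g).
Proof.
intros [Hc HO]. split; [intros s; apply continuous_path_rev, Hc|].
intros s Hs. apply HO. unfold unit_interval in *. lra.
Qed.

Lemma Rinv_INR_le n m : (0 < n)%nat -> (n <= m)%nat -> / INR m <= / INR n.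
Proof. intros Hn Hm. apply Rinv_le_contravar; [apply lt_0_INR, Hn | apply le_INR, Hm]. Qed.

(** * Closed forms are exact on simply connected domains *)

Lemma simply_connected_open Om : simply_connected Om -> open Om.
Proof. intros [[H _] _]. exact H. Qed.

Section Poincare.
Variable Om : C -> Prop.
Variables a b : C -> R.
Hypothesis a_C1 : C1_on Om a.
Hypothesis b_C1 : C1_on Om b.
Hypothesis ab_closed : forall z, Om z -> pv a z = pu b z.

Lemma b_ex_du x y : Om (x, y) -> ex_derive (fun u => b (u, y)) x.
Proof. exact (C1_ex_pu Om b (x, y) b_C1). Qed.

Lemma b_du_continuous x y : Om (x, y) -> continuity_2d_pt (fun u v => Derive (fun s => b (s, v)) u) x y.
Proof. intros H. generalize (C1_continuous_pu Om b (x, y) b_C1 H). rewrite pu_fun. apply continuous_C_2d. Qed.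

Lemma b_du_slice_continuous x y : Om (x, y) -> continuous (fun t => Derive (fun s => b (s, t)) x) y.
Proof. intros H. generalize (continuous_slice_v _ x y (C1_continuous_pu Om b (x, y) b_C1 H)). now rewrite pu_fun. Qed.

Lemma a_v_is_derive_b_u x y : Om (x, y) -> is_derive (fun t => a (x, t)) y (Derive (fun s => b (s, y)) x).
Proof.
intros H. generalize (ab_closed (x, y) H). rewrite pu_Derive, pv_Derive. simpl. intros <-.
apply Derive_correct, (C1_ex_pv Om a (x, y) a_C1 H).
Qed.

(* The integral of [a du + b dv] along the horizontal-then-vertical path from [x] to [w]. *)
Definition corner_integral (x w : C) : R :=
  RInt (fun t => a (t, snd x)) (fst x) (fst w) + RInt (fun t => b (fst w, t)) (snd x) (snd w).

Lemma corner_integral_pu c r x w : (forall y, square c r y -> Om y) -> square c r x -> square c r w ->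
  is_derive (fun s => corner_integral x (s, snd w)) (fst w) (a w).
Proof.
intros HO [Hx1 Hx2] [Hw1 Hw2].
destruct x as [x1 x2], w as [w1 w2]. unfold corner_integral; simpl in *.
assert (In : forall s t, Rabs (s - fst c) < r -> Rabs (t - snd c) < r -> Om (s, t))
  by (intros; apply HO; split; assumption).
assert (Hloc := locally_Rabs_lt _ _ _ Hw1).
replace (a (w1, w2)) with (a (w1, x2) + (a (w1, w2) - a (w1, x2))) by ring.
apply (is_derive_plus (fun s => RInt (fun t => a (t, x2)) x1 s) (fun s => RInt (fun t => b (s, t)) x2 w2)).
- apply (is_derive_RInt (fun t => a (t, x2)) (fun s => RInt (fun t => a (t, x2)) x1 s) x1).
  + eapply filter_imp; [|exact Hloc]. intros s Hs. apply (RInt_correct (V:=R_CompleteNormedModule)).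
    apply (ex_RInt_continuous (V:=R_CompleteNormedModule)). intros t Ht.
    refine (continuous_slice_u a _ _ _); apply (C1_continuous Om a _ a_C1); apply In; [exact (Rabs_lt_between _ _ _ _ _ Hx1 Hs Ht) | exact Hx2].
  + refine (continuous_slice_u a _ _ _); apply (C1_continuous Om a _ a_C1); apply In; assumption.
- assert (FTC : is_RInt (fun t => Derive (fun u => b (u, t)) w1) x2 w2 (a (w1, w2) - a (w1, x2))).
  { apply (is_RInt_derive (fun t => a (w1, t))); intros t Ht.
    - apply a_v_is_derive_b_u; apply In; [exact Hw1 | exact (Rabs_lt_between _ _ _ _ _ Hx2 Hw2 Ht)].
    - apply b_du_slice_continuous; apply In; [exact Hw1 | exact (Rabs_lt_between _ _ _ _ _ Hx2 Hw2 Ht)]. }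
  rewrite <- (is_RInt_unique _ _ _ _ FTC). apply is_derive_RInt_param.
  + eapply filter_imp; [|exact Hloc]. intros s Hs t Ht. apply b_ex_du; apply In; [exact Hs | exact (Rabs_lt_between _ _ _ _ _ Hx2 Hw2 Ht)].
  + intros t Ht. apply b_du_continuous; apply In; [exact Hw1 | exact (Rabs_lt_between _ _ _ _ _ Hx2 Hw2 Ht)].
  + eapply filter_imp; [|exact Hloc]. intros s Hs.
    apply (ex_RInt_continuous (V:=R_CompleteNormedModule)). intros t Ht.
    refine (continuous_slice_v b _ _ _); apply (C1_continuous Om b _ b_C1); apply In; [exact Hs | exact (Rabs_lt_between _ _ _ _ _ Hx2 Hw2 Ht)].
Qed.

Lemma corner_integral_pv c r x w : (forall y, square c r y -> Om y) -> square c r x -> square c r w ->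
  is_derive (fun s => corner_integral x (fst w, s)) (snd w) (b w).
Proof.
intros HO [Hx1 Hx2] [Hw1 Hw2].
destruct x as [x1 x2], w as [w1 w2]. unfold corner_integral; simpl in *.
assert (Hloc := locally_Rabs_lt _ _ _ Hw2).
replace (b (w1, w2)) with (0 + b (w1, w2)) by ring.
apply (is_derive_plus (fun _ => RInt (fun t => a (t, x2)) x1 w1) (fun s => RInt (fun t => b (w1, t)) x2 s)).
- apply (is_derive_const (K:=R_AbsRing) (V:=R_NormedModule)).
- apply (is_derive_RInt (fun t => b (w1, t)) (fun s => RInt (fun t => b (w1, t)) x2 s) x2).
  + eapply filter_imp; [|exact Hloc]. intros s Hs. apply (RInt_correct (V:=R_CompleteNormedModule)).
    apply (ex_RInt_continuous (V:=R_CompleteNormedModule)). intros t Ht.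
    refine (continuous_slice_v b _ _ _); apply (C1_continuous Om b _ b_C1); apply HO.
    split; [exact Hw1 | exact (Rabs_lt_between _ _ _ _ _ Hx2 Hs Ht)].
  + refine (continuous_slice_v b _ _ _); apply (C1_continuous Om b _ b_C1); apply HO. split; assumption.
Qed.

Lemma corner_integral_refl x : corner_integral x x = 0.
Proof. unfold corner_integral. rewrite !RInt_point. unfold zero; simpl. ring. Qed.

Lemma eq_on_square_of_partials_zero (phi : C -> R) c r x y :
  (forall w, square c r w ->
     is_derive (fun s => phi (s, snd w)) (fst w) 0 /\ is_derive (fun s => phi (fst w, s)) (snd w) 0) ->
  square c r x -> square c r y -> phi x = phi y.
Proof.
intros H [Hx1 Hx2] [Hy1 Hy2]. destruct x as [x1 x2], y as [y1 y2]; simpl in *.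
transitivity (phi (y1, x2)).
- apply (eq_of_derive_zero (fun s => phi (s, x2))). intros t Ht.
  apply (H (t, x2)). split; [exact (Rabs_lt_between _ _ _ _ _ Hx1 Hy1 Ht) | exact Hx2].
- apply (eq_of_derive_zero (fun s => phi (y1, s))). intros t Ht.
  apply (H (y1, t)). split; [exact Hy1 | exact (Rabs_lt_between _ _ _ _ _ Hx2 Hy2 Ht)].
Qed.

(* Both sides have the same partial derivatives in [z]. *)
Lemma corner_integral_cocycle c r x y z : (forall w, square c r w -> Om w) ->
  square c r x -> square c r y -> square c r z ->
  corner_integral x z = corner_integral x y + corner_integral y z.
Proof.
intros HO Hx Hy Hz.
assert (E : corner_integral x z - corner_integral y z = corner_integral x y - corner_integral y y).
{ apply (eq_on_square_of_partials_zero (fun w => corner_integral x w - corner_integral y w) c r); auto.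
  intros w Hw. split.
  - replace 0 with (a w - a w) by ring.
    apply (is_derive_minus (fun s => corner_integral x (s, snd w)) (fun s => corner_integral y (s, snd w)));
      eapply corner_integral_pu; eauto.
  - replace 0 with (b w - b w) by ring.
    apply (is_derive_minus (fun s => corner_integral x (fst w, s)) (fun s => corner_integral y (fst w, s)));
      eapply corner_integral_pv; eauto. }
rewrite corner_integral_refl in E. lra.
Qed.

Lemma corner_integral_antisym c r x y : (forall w, square c r w -> Om w) -> square c r x -> square c r y ->
  corner_integral y x = - corner_integral x y.
Proof.
intros HO Hx Hy. generalize (corner_integral_cocycle c r x y x HO Hx Hy Hx).
rewrite corner_integral_refl. lra.
Qed.

Lemma chain_sum_in_square c r f m : (forall w, square c r w -> Om w) ->
  (forall j, (j <= m)%nat -> square c r (f j)) ->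
  chain_sum corner_integral f m = corner_integral (f O) (f m).
Proof.
intros HO Hf. induction m as [|m IH]; simpl; [symmetry; apply corner_integral_refl|].
rewrite IH by (intros; apply Hf; lia). symmetry. apply (corner_integral_cocycle c r); auto; apply Hf; lia.
Qed.

Lemma path_sum_refine g eta n m : path_lebesgue_number Om g eta -> (0 < n)%nat -> / INR n < eta -> (0 < m)%nat ->
  path_sum corner_integral g n = path_sum corner_integral g (n * m).
Proof.
intros [He HF] Hn Hne Hm. unfold path_sum.
assert (Hn' := lt_0_INR _ Hn). assert (Hm' := lt_0_INR _ Hm).
assert (Coarse : forall k, INR (k * m) / INR (n * m) = INR k / INR n)
  by (intros k; rewrite !mult_INR; field; lra).
enough (K : forall k, (k <= n)%nat -> chain_sum corner_integral (fun i => g (INR i / INR n)) k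
  = chain_sum corner_integral (fun i => g (INR i / INR (n * m))) (k * m)) by (apply K; lia).
induction k as [|k IH]; intros Hk; [reflexivity|].
replace (S k * m)%nat with (k * m + m)%nat by lia. rewrite chain_sum_add. cbn [chain_sum].
rewrite IH by lia. f_equal.
destruct (HF _ (INR_div_unit k n Hn ltac:(lia))) as [c [r [Hr [HO Hq]]]].
rewrite (chain_sum_in_square c r); auto.
- rewrite Nat.add_0_r, Coarse. replace (k * m + m)%nat with (S k * m)%nat by lia. now rewrite Coarse.
- intros j Hj. apply Hq. rewrite plus_INR, !mult_INR.
  replace ((INR k * INR m + INR j) / (INR n * INR m) - INR k / INR n) with (INR j / INR m * / INR n)
    by (field; lra).
  rewrite Rabs_pos_eq by (apply Rmult_le_pos; [apply INR_div_unit; lia | left; apply Rinv_0_lt_compat; lra]).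
  apply Rle_lt_trans with (/ INR n); [|exact Hne].
  rewrite <- (Rmult_1_l (/ INR n)) at 2. apply Rmult_le_compat_r; [left; apply Rinv_0_lt_compat; lra|].
  apply INR_div_unit; lia.
Qed.

Lemma path_sum_stable g eta n m : path_lebesgue_number Om g eta ->
  (0 < n)%nat -> / INR n < eta -> (0 < m)%nat -> / INR m < eta ->
  path_sum corner_integral g n = path_sum corner_integral g m.
Proof.
intros HF Hn Hne Hm Hme.
rewrite (path_sum_refine g eta n m), (path_sum_refine g eta m n), Nat.mul_comm; auto.
Qed.

Lemma path_sum_concat g1 g2 z m : (0 < m)%nat -> g2 0 = z -> g1 1 = z ->
  path_sum corner_integral (path_concat g1 g2 z) (2 * m)
  = path_sum corner_integral g1 m + path_sum corner_integral g2 m.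
Proof.
intros Hm H2 H1. assert (Hm' := lt_0_INR _ Hm). unfold path_sum.
replace (2 * m)%nat with (m + m)%nat by lia. rewrite chain_sum_add. f_equal; apply chain_sum_ext; intros j Hj.
- apply le_INR in Hj. rewrite plus_INR, path_concat_l; auto.
  + f_equal. field. lra.
  + apply Rmult_le_reg_l with 2; [lra|]. replace (2 * (INR j / (INR m + INR m))) with (INR j / INR m) by (field; lra).
    replace (2 * / 2) with 1 by field. apply INR_div_unit; [exact Hm | apply INR_le; exact Hj].
- rewrite plus_INR, plus_INR, path_concat_r; auto.
  + f_equal. field. lra.
  + apply Rmult_le_reg_l with 2; [lra|]. replace (2 * ((INR m + INR j) / (INR m + INR m))) with (1 + INR j / INR m)
      by (field; lra).
    replace (2 * / 2) with 1 by field. pose proof (INR_div_unit j m Hm Hj). lra.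
Qed.

Lemma path_sum_rev g eta m : path_lebesgue_number Om g eta -> (0 < m)%nat -> / INR m < eta ->
  path_sum corner_integral (path_rev g) m = - path_sum corner_integral g m.
Proof.
intros [He HF] Hm Hme. assert (Hm' := lt_0_INR _ Hm). unfold path_sum, path_rev.
rewrite (chain_sum_ext corner_integral _ (fun i => g (INR (m - i)%nat / INR m))).
- apply (chain_sum_rev corner_integral (fun k => g (INR k / INR m)) m). intros k Hk.
  destruct (HF _ (INR_div_unit k m Hm ltac:(lia))) as [c [r [Hr [HO Hq]]]].
  apply (corner_integral_antisym c r); auto; apply Hq.
  + rewrite Rminus_diag, Rabs_R0. exact He.
  + rewrite S_INR. replace ((INR k + 1) / INR m - INR k / INR m) with (/ INR m) by (field; lra).
    rewrite Rabs_pos_eq; [exact Hme | left; apply Rinv_0_lt_compat; exact Hm'].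
- intros j Hj. f_equal. rewrite minus_INR by lia. field. lra.
Qed.

Definition grid (Hm : R * R -> C) (n i j : nat) : C := Hm (INR i / INR n, INR j / INR n).

Lemma grid_cell_in_square Hm eta n k j : lebesgue_number Om Hm 0 0 1 eta ->
  (0 < n)%nat -> / INR n < eta -> (k < n)%nat -> (j < n)%nat ->
  exists c r, (forall w, square c r w -> Om w) /\
    square c r (grid Hm n k j) /\ square c r (grid Hm n (S k) j) /\
    square c r (grid Hm n k (S j)) /\ square c r (grid Hm n (S k) (S j)).
Proof.
intros [He G] Hn Hne Hk Hj. assert (Hn' := lt_0_INR _ Hn).
assert (Near0 : forall i, Rabs (INR i / INR n - INR i / INR n) < eta)
  by (intros; rewrite Rminus_diag, Rabs_R0; exact He).
assert (Near1 : forall i, Rabs (INR (S i) / INR n - INR i / INR n) < eta).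
{ intros i. rewrite S_INR. replace ((INR i + 1) / INR n - INR i / INR n) with (/ INR n) by (field; lra).
  rewrite Rabs_pos_eq; [exact Hne | left; apply Rinv_0_lt_compat; exact Hn']. }
destruct (G (INR k / INR n) (INR j / INR n)) as [c [r [_ [HO Hq]]]];
  [rewrite Rplus_0_l; apply INR_div_unit; lia .. |].
exists c, r. unfold grid. split; [exact HO|]. split; [|split; [|split]]; apply Hq; auto.
Qed.

(* Moving a row of the grid up by one step does not change its sum: every grid cell lies in a
   square of [Om], where the cocycle identity makes going around the cell contribute nothing. *)
Lemma grid_row_step Hm eta n j : lebesgue_number Om Hm 0 0 1 eta -> (0 < n)%nat -> / INR n < eta ->
  (j < n)%nat -> forall k, (k <= n)%nat ->
  chain_sum corner_integral (fun i => grid Hm n i j) k + corner_integral (grid Hm n k j) (grid Hm n k (S j))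
  = corner_integral (grid Hm n 0 j) (grid Hm n 0 (S j)) + chain_sum corner_integral (fun i => grid Hm n i (S j)) k.
Proof.
intros HL Hn Hne Hj k. induction k as [|k IH]; intros Hk; [simpl; ring|].
destruct (grid_cell_in_square Hm eta n k j HL Hn Hne ltac:(lia) Hj) as [c [r [HO [S00 [S10 [S01 S11]]]]]].
assert (Cell := corner_integral_cocycle c r _ _ _ HO S00 S10 S11).
rewrite (corner_integral_cocycle c r _ _ _ HO S00 S01 S11) in Cell.
cbn [chain_sum]. specialize (IH ltac:(lia)). lra.
Qed.

Lemma path_sum_null_homotopic g Hm z0 eta n : lebesgue_number Om Hm 0 0 1 eta ->
  (forall s, Hm (s, 0) = g s) -> (forall s, Hm (s, 1) = z0) ->
  (forall t, Hm (0, t) = z0) -> (forall t, Hm (1, t) = z0) ->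
  (0 < n)%nat -> / INR n < eta -> path_sum corner_integral g n = 0.
Proof.
intros HL Hb Ht Hl Hr Hn Hne. assert (Hn' := lt_0_INR _ Hn).
set (row j := chain_sum corner_integral (fun i => grid Hm n i j) n).
assert (Edge : forall i, grid Hm n i n = z0 /\ grid Hm n 0 i = z0 /\ grid Hm n n i = z0).
{ intros i. unfold grid. replace (INR n / INR n) with 1 by (field; lra).
  replace (INR 0 / INR n) with 0 by (simpl; field; lra). auto. }
assert (Rows : forall j, (j <= n)%nat -> row 0%nat = row j).
{ induction j as [|j IH]; intros Hj; [reflexivity|].
  rewrite IH by lia. generalize (grid_row_step Hm eta n j HL Hn Hne ltac:(lia) n (le_n n)).
  destruct (Edge j) as [_ [-> ->]]. destruct (Edge (S j)) as [_ [-> ->]].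
  rewrite corner_integral_refl. unfold row. lra. }
assert (Bottom : row 0%nat = path_sum corner_integral g n).
{ apply chain_sum_ext. intros i _. unfold grid. replace (INR 0 / INR n) with 0 by (simpl; field; lra). apply Hb. }
assert (Top : row n = 0).
{ unfold row. generalize n at 3. intros k. induction k as [|k IH]; [reflexivity|].
  cbn [chain_sum]. rewrite IH. destruct (Edge k) as [-> _]. destruct (Edge (S k)) as [-> _].
  rewrite corner_integral_refl. ring. }
rewrite <- Bottom, <- Top. apply Rows, le_n.
Qed.

Hypothesis Om_simply_connected : simply_connected Om.

Let Om_open : open Om := simply_connected_open Om Om_simply_connected.

(* [v] is the integral of [a du + b dv] along a path from [z0] to [z], namely the common value of
   its sums over all fine enough subdivisions. *)
Definition path_integral_value (z0 z : C) (v : R) : Prop :=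
  exists g eta, path_in Om g /\ g 0 = z0 /\ g 1 = z /\ path_lebesgue_number Om g eta /\
    forall n, (0 < n)%nat -> / INR n < eta -> path_sum corner_integral g n = v.

Lemma path_integral_value_intro g eta n0 z0 z :
  path_in Om g -> g 0 = z0 -> g 1 = z -> path_lebesgue_number Om g eta -> (0 < n0)%nat -> / INR n0 < eta ->
  path_integral_value z0 z (path_sum corner_integral g n0).
Proof.
intros Hp H0 H1 HF Hn0 He. exists g, eta. repeat (split; [assumption|]).
intros n Hn Hne. apply (path_sum_stable g eta); auto.
Qed.

Lemma path_integral_value_exists z0 z : Om z0 -> Om z -> exists v, path_integral_value z0 z v.
Proof.
intros H0 H. pose proof Om_simply_connected as [[_ [_ Hconn]] _].
destruct (Hconn z0 z H0 H) as [g [Hp [G0 G1]]].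
destruct (path_lebesgue_number_exists Om g Om_open Hp) as [eta HF].
destruct (archimed_cor1 eta (proj1 HF)) as [N [HN HN0]].
eexists. apply (path_integral_value_intro g eta N); eauto.
Qed.

(* Two paths from [z0] to [z] form a loop, which is null-homotopic. *)
Lemma path_integral_value_unique z0 z v1 v2 :
  path_integral_value z0 z v1 -> path_integral_value z0 z v2 -> v1 = v2.
Proof.
intros [g1 [e1 [P1 [H10 [H11 [F1 V1]]]]]] [g2 [e2 [P2 [H20 [H21 [F2 V2]]]]]].
set (lam := path_concat g1 (path_rev g2) z).
assert (Rev0 : path_rev g2 0 = z) by (unfold path_rev; rewrite Rminus_0_r; exact H21).
assert (Plam : path_in Om lam) by (apply path_in_concat; auto using path_in_rev).
assert (L0 : lam 0 = z0) by (unfold lam; rewrite path_concat_l by (auto; lra); now rewrite Rmult_0_r).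
assert (L1 : lam 1 = z0).
{ unfold lam. rewrite path_concat_r by (auto; lra). unfold path_rev.
  now replace (1 - (2 * 1 - 1)) with 0 by ring. }
destruct (proj2 Om_simply_connected lam Plam (eq_trans L0 (eq_sym L1)))
  as [Hm [Hmc [HmO [Hm0 [Hm1 [Hml Hmr]]]]]].
destruct (has_lebesgue_number_unit_square Om Hm Om_open Hmc) as [eh HL];
  [intros s t Hs Ht; apply HmO; assumption|].
destruct (archimed_cor1 (Rmin eh (Rmin e1 e2))) as [N [HN HN0]].
{ destruct HL, F1, F2. repeat apply Rmin_pos; assumption. }
assert (M1 := Rmin_l eh (Rmin e1 e2)). assert (M2 := Rmin_r eh (Rmin e1 e2)).
assert (M3 := Rmin_l e1 e2). assert (M4 := Rmin_r e1 e2).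
assert (HN2 := Rinv_INR_le N (2 * N) HN0 ltac:(lia)).
assert (Z := path_sum_null_homotopic lam Hm (lam 0) eh (2 * N) HL Hm0 Hm1 Hml Hmr ltac:(lia) ltac:(lra)).
unfold lam in Z. rewrite path_sum_concat, (path_sum_rev g2 e2), V1, V2 in Z by (auto; lra). lra.
Qed.

Definition potential (z0 z : C) : R := epsilon (inhabits 0) (path_integral_value z0 z).

Lemma potential_spec z0 z : Om z0 -> Om z -> path_integral_value z0 z (potential z0 z).
Proof. intros H0 H. unfold potential. apply epsilon_spec, path_integral_value_exists; assumption. Qed.

(* Extend a path from [z0] to [z] by the segment from [z] to [w]. *)
Lemma potential_local z0 z : Om z0 -> Om z -> exists r, 0 < r /\ (forall w, square z r w -> Om w) /\
  forall w, square z r w -> potential z0 w = potential z0 z + corner_integral z w.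
Proof.
intros H0 Hz. destruct (open_square Om z Om_open Hz) as [r [Hr HO]].
exists r. split; [exact Hr|]. split; [exact HO|]. intros w Hw.
apply (path_integral_value_unique z0 w); [apply potential_spec; auto|].
destruct (potential_spec z0 z H0 Hz) as [g [eta [Pg [G0 [G1 [HF HV]]]]]].
set (g' := path_concat g (segment z w) z).
assert (Pseg : path_in Om (segment z w)).
{ split; [intros; apply continuous_segment|]. intros s Hs. apply HO, segment_in_square; auto. }
assert (Pg' : path_in Om g') by (apply path_in_concat; auto using segment_0).
destruct (path_lebesgue_number_exists Om g' Om_open Pg') as [eta' HF'].
destruct (archimed_cor1 (Rmin eta eta')) as [N [HN HN0]].
{ destruct HF, HF'. apply Rmin_pos; assumption. }
assert (M1 := Rmin_l eta eta'). assert (M2 := Rmin_r eta eta').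
assert (HN2 := Rinv_INR_le N (2 * N) HN0 ltac:(lia)).
assert (Seg : path_sum corner_integral (segment z w) N = corner_integral z w).
{ unfold path_sum. rewrite (chain_sum_in_square z r); auto.
  - replace (INR 0 / INR N) with 0 by (simpl; field; apply not_0_INR; lia).
    replace (INR N / INR N) with 1 by (field; apply not_0_INR; lia). now rewrite segment_0, segment_1.
  - intros j Hj. apply segment_in_square; [exact Hw | apply INR_div_unit; assumption]. }
replace (potential z0 z + corner_integral z w) with (path_sum corner_integral g' (2 * N)).
- apply (path_integral_value_intro g' eta'); auto; [| | lia | lra].
  + unfold g'. rewrite path_concat_l by (auto using segment_0; lra). now rewrite Rmult_0_r.
  + unfold g'. rewrite path_concat_r by (auto; lra). replace (2 * 1 - 1) with 1 by ring. apply segment_1.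
- unfold g'. rewrite path_sum_concat, Seg, (HV N) by (auto using segment_0; lra). reflexivity.
Qed.

Lemma potential_partials z0 z : Om z0 -> Om z -> exists r, 0 < r /\ forall w, square z r w ->
  is_derive (fun s => potential z0 (s, snd w)) (fst w) (a w) /\
  is_derive (fun s => potential z0 (fst w, s)) (snd w) (b w).
Proof.
intros H0 Hz. destruct (potential_local z0 z H0 Hz) as [r [Hr [HO Hloc]]].
exists r. split; [exact Hr|]. intros w [Hw1 Hw2]. split.
- apply (is_derive_ext_loc (fun s => potential z0 z + corner_integral z (s, snd w))).
  + apply (filter_imp (fun s => Rabs (s - fst z) < r)); [|apply locally_Rabs_lt, Hw1].
    intros s Hs. symmetry. apply Hloc. split; assumption.
  + replace (a w) with (0 + a w) by ring.
    apply (is_derive_plus (fun _ => potential z0 z) (fun s => corner_integral z (s, snd w))).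
    * apply (is_derive_const (K:=R_AbsRing) (V:=R_NormedModule)).
    * apply (corner_integral_pu z r); [exact HO | apply square_center, Hr | split; assumption].
- apply (is_derive_ext_loc (fun s => potential z0 z + corner_integral z (fst w, s))).
  + apply (filter_imp (fun s => Rabs (s - snd z) < r)); [|apply locally_Rabs_lt, Hw2].
    intros s Hs. symmetry. apply Hloc. split; assumption.
  + replace (b w) with (0 + b w) by ring.
    apply (is_derive_plus (fun _ => potential z0 z) (fun s => corner_integral z (fst w, s))).
    * apply (is_derive_const (K:=R_AbsRing) (V:=R_NormedModule)).
    * apply (corner_integral_pv z r); [exact HO | apply square_center, Hr | split; assumption].
Qed.

Lemma potential_continuous z0 z : Om z0 -> Om z -> continuous (potential z0) z.
Proof.
intros H0 Hz. destruct (potential_partials z0 z H0 Hz) as [r [Hr HD]].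
destruct (continuous_locally_bounded a z (C1_continuous Om a z a_C1 Hz)) as [ra [Hra Ba]].
destruct (continuous_locally_bounded b z (C1_continuous Om b z b_C1 Hz)) as [rb [Hrb Bb]].
set (r' := Rmin r (Rmin ra rb)).
assert (Sub : forall r0, r' <= r0 -> forall w, square z r' w -> square z r0 w)
  by (intros r0 Hr0 w [W1 W2]; split; lra).
apply (continuous_of_bounded_partials _ a b z r' (Rabs (a z) + Rabs (b z) + 1)).
- unfold r'. repeat apply Rmin_pos; assumption.
- intros w Hw. apply HD, (Sub r); [apply Rmin_l | exact Hw].
- intros w Hw. pose proof (Rabs_pos (a z)). pose proof (Rabs_pos (b z)).
  assert (Ha := Ba w (Sub ra ltac:(unfold r'; eapply Rle_trans; [apply Rmin_r | apply Rmin_l]) w Hw)).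
  assert (Hb := Bb w (Sub rb ltac:(unfold r'; eapply Rle_trans; [apply Rmin_r | apply Rmin_r]) w Hw)).
  split; lra.
Qed.

Lemma poincare_lemma : exists M : C -> R, C2_on Om M /\ forall z, Om z -> pu M z = a z /\ pv M z = b z.
Proof.
pose proof Om_simply_connected as [[_ [[z0 Hz0] _]] _].
assert (Hpu : forall z, Om z -> pu (potential z0) z = a z).
{ intros z Hz. destruct (potential_partials z0 z Hz0 Hz) as [r [Hr HD]].
  rewrite pu_Derive. apply is_derive_unique, (HD z (square_center z r Hr)). }
assert (Hpv : forall z, Om z -> pv (potential z0) z = b z).
{ intros z Hz. destruct (potential_partials z0 z Hz0 Hz) as [r [Hr HD]].
  rewrite pv_Derive. apply is_derive_unique, (HD z (square_center z r Hr)). }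
exists (potential z0). split; [|split; auto]. split; [|split].
- apply C1_on_intro; intros z Hz.
  + exact (potential_continuous z0 z Hz0 Hz).
  + destruct (potential_partials z0 z Hz0 Hz) as [r [Hr HD]]. exists (a z). apply (HD z (square_center z r Hr)).
  + destruct (potential_partials z0 z Hz0 Hz) as [r [Hr HD]]. exists (b z). apply (HD z (square_center z r Hr)).
  + refine (continuous_ext_on Om Om_open a _ z _ Hz (C1_continuous Om a z a_C1 Hz)).
    intros w Hw. symmetry. auto.
  + refine (continuous_ext_on Om Om_open b _ z _ Hz (C1_continuous Om b z b_C1 Hz)).
    intros w Hw. symmetry. auto.
- apply (C1_on_ext Om Om_open a); auto. intros w Hw. symmetry. auto.
- apply (C1_on_ext Om Om_open b); auto. intros w Hw. symmetry. auto.
Qed.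

End Poincare.

(** * Weierstrass data *)

Definition laplacian (f : C -> R) (z : C) : R := pu (pu f) z + pv (pv f) z.

Definition cauchy_riemann (f1 f2 : C -> R) (z : C) : Prop := pu f1 z = pv f2 z /\ pv f1 z = - pu f2 z.

Lemma dz_coords F z : dz F z =
  ((pu (fun w => Re (F w)) z + pv (fun w => Im (F w)) z) / 2,
   (pu (fun w => Im (F w)) z - pv (fun w => Re (F w)) z) / 2).
Proof.
unfold dz, cpu, cpv, Cminus, Cplus, Copp, Cmult, Cinv, Ci, RtoC. apply injective_projections; simpl; field.
Qed.

Lemma dzb_coords F z : dzb F z =
  ((pu (fun w => Re (F w)) z - pv (fun w => Im (F w)) z) / 2,
   (pu (fun w => Im (F w)) z + pv (fun w => Re (F w)) z) / 2).
Proof.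
unfold dzb, cpu, cpv, Cplus, Cmult, Cinv, Ci, RtoC. apply injective_projections; simpl; field.
Qed.

Lemma dzb_eq_0_iff F z : dzb F z = 0%C <-> cauchy_riemann (fun w => Re (F w)) (fun w => Im (F w)) z.
Proof.
rewrite dzb_coords. unfold cauchy_riemann. split.
- intros E. apply (f_equal fst) in E as E1. apply (f_equal snd) in E as E2. simpl in E1, E2. lra.
- intros [E1 E2]. apply injective_projections; simpl; lra.
Qed.

Lemma dzR_coords f z : dzR f z = (pu f z / 2, - pv f z / 2).
Proof.
unfold dzR. rewrite dz_coords. unfold cR, RtoC. simpl. rewrite (pu_const 0), (pv_const 0).
change (pu (fun w => f w) z) with (pu f z). change (pv (fun w => f w) z) with (pv f z).
apply injective_projections; simpl; field.
Qed.

Lemma dzzbR_coords f z : dzzbR f z = (laplacian f z / 4, (pu (pv f) z - pv (pu f) z) / 4).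
Proof.
unfold dzzbR. rewrite dz_coords.
assert (E1 : (fun w => Re (dzb (cR f) w)) = fun w => / 2 * pu f w).
{ apply functional_extensionality. intros w. rewrite dzb_coords. unfold cR, RtoC. simpl.
  rewrite (pv_const 0). change (pu (fun w => f w) w) with (pu f w). field. }
assert (E2 : (fun w => Im (dzb (cR f) w)) = fun w => / 2 * pv f w).
{ apply functional_extensionality. intros w. rewrite dzb_coords. unfold cR, RtoC. simpl.
  rewrite (pu_const 0). change (pv (fun w => f w) w) with (pv f w). field. }
rewrite E1, E2, !pu_scal, !pv_scal. unfold laplacian. apply injective_projections; simpl; field.
Qed.

Lemma sqnorm_neq_0 (c : C) : c <> 0%C -> fst c * fst c + snd c * snd c <> 0.
Proof.
destruct c as [x y]. simpl. intros H E. apply H.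
assert (x = 0) by nra. assert (y = 0) by nra. subst. reflexivity.
Qed.

Section CauchyRiemannForms.
Variable Om : C -> Prop.
Hypothesis Om_open : open Om.
Variables f1 f2 P : C -> R.
Hypothesis f1_C1 : C1_on Om f1.
Hypothesis f2_C1 : C1_on Om f2.
Hypothesis P_C2 : C2_on Om P.
Hypothesis f_cauchy_riemann : forall z, Om z -> cauchy_riemann f1 f2 z.

(* The real part and minus the imaginary part of [2 (f1 + i f2) P_z]. *)
Definition cr_form_u (w : C) : R := f1 w * pu P w + f2 w * pv P w.
Definition cr_form_v (w : C) : R := f1 w * pv P w - f2 w * pu P w.

Lemma cr_form_u_C1 : C1_on Om cr_form_u.
Proof. apply (C1_on_plus Om Om_open); apply (C1_on_mult Om Om_open); auto using C2_pu, C2_pv. Qed.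

Lemma cr_form_v_C1 : C1_on Om cr_form_v.
Proof. apply (C1_on_minus Om Om_open); apply (C1_on_mult Om Om_open); auto using C2_pu, C2_pv. Qed.

Lemma cr_form_partials z : Om z ->
  pu cr_form_u z = pu f1 z * pu P z + f1 z * pu (pu P) z + (pu f2 z * pv P z + f2 z * pu (pv P) z) /\
  pv cr_form_u z = pv f1 z * pu P z + f1 z * pv (pu P) z + (pv f2 z * pv P z + f2 z * pv (pv P) z) /\
  pu cr_form_v z = pu f1 z * pv P z + f1 z * pu (pv P) z - (pu f2 z * pu P z + f2 z * pu (pu P) z) /\
  pv cr_form_v z = pv f1 z * pv P z + f1 z * pv (pv P) z - (pv f2 z * pu P z + f2 z * pv (pu P) z).
Proof.
intros Hz.
assert (U : forall f, C1_on Om f -> ex_pu f z) by (intros f Hf; exact (C1_ex_pu Om f z Hf Hz)).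
assert (V : forall f, C1_on Om f -> ex_pv f z) by (intros f Hf; exact (C1_ex_pv Om f z Hf Hz)).
assert (HPu := C2_pu _ _ P_C2). assert (HPv := C2_pv _ _ P_C2).
unfold cr_form_u, cr_form_v.
rewrite pu_plus, pv_plus, pu_minus, pv_minus, !pu_mult, !pv_mult;
  auto using ex_pu_mult, ex_pv_mult.
Qed.

Lemma cr_form_curl z : Om z -> pv cr_form_u z - pu cr_form_v z = f2 z * laplacian P z.
Proof.
intros Hz. destruct (cr_form_partials z Hz) as [_ [-> [-> _]]].
destruct (f_cauchy_riemann z Hz) as [CR1 CR2]. rewrite (schwarz_on Om Om_open P z P_C2 Hz).
unfold laplacian. rewrite CR2, CR1. ring.
Qed.

Lemma cr_form_div z : Om z -> pu cr_form_u z + pv cr_form_v z = f1 z * laplacian P z.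
Proof.
intros Hz. destruct (cr_form_partials z Hz) as [-> [_ [_ ->]]].
destruct (f_cauchy_riemann z Hz) as [CR1 CR2]. rewrite (schwarz_on Om Om_open P z P_C2 Hz).
unfold laplacian. rewrite CR2, CR1. ring.
Qed.

End CauchyRiemannForms.

Lemma Re_Cinv_fun (F : C -> C) :
  (fun w => Re (/ F w)%C) = fun w => Re (F w) * / (Re (F w) * Re (F w) + Im (F w) * Im (F w)).
Proof.
apply functional_extensionality. intros w. unfold Cinv, Re, Im. simpl.
unfold Rdiv. do 2 f_equal. ring.
Qed.

Lemma Im_Cinv_fun (F : C -> C) :
  (fun w => Im (/ F w)%C) = fun w => - Im (F w) * / (Re (F w) * Re (F w) + Im (F w) * Im (F w)).
Proof.
apply functional_extensionality. intros w. unfold Cinv, Re, Im. simpl.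
unfold Rdiv. do 2 f_equal. ring.
Qed.

Section HolomorphicInverse.
Variable Om : C -> Prop.
Hypothesis Om_open : open Om.
Variable F : C -> C.
Hypothesis F_re_C2 : C2_on Om (fun w => Re (F w)).
Hypothesis F_im_C2 : C2_on Om (fun w => Im (F w)).
Hypothesis F_neq_0 : forall z, Om z -> F z <> 0%C.

Lemma sqnorm_C2 : C2_on Om (fun w => Re (F w) * Re (F w) + Im (F w) * Im (F w)).
Proof. apply (C2_on_plus Om Om_open); apply (C2_on_mult Om Om_open); assumption. Qed.

Lemma sqnorm_F_neq_0 w : Om w -> Re (F w) * Re (F w) + Im (F w) * Im (F w) <> 0.
Proof. intros Hw. apply (sqnorm_neq_0 (F w)), F_neq_0, Hw. Qed.

Lemma Re_Cinv_C2 : C2_on Om (fun w => Re (/ F w)%C).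
Proof.
rewrite Re_Cinv_fun. apply (C2_on_mult Om Om_open); [assumption|].
apply (C2_on_inv Om Om_open); [apply sqnorm_C2 | apply sqnorm_F_neq_0].
Qed.

Lemma Im_Cinv_C2 : C2_on Om (fun w => Im (/ F w)%C).
Proof.
rewrite Im_Cinv_fun. apply (C2_on_mult Om Om_open); [apply (C2_on_opp Om Om_open); assumption|].
apply (C2_on_inv Om Om_open); [apply sqnorm_C2 | apply sqnorm_F_neq_0].
Qed.

Lemma cauchy_riemann_Cinv z : Om z -> cauchy_riemann (fun w => Re (F w)) (fun w => Im (F w)) z ->
  cauchy_riemann (fun w => Re (/ F w)%C) (fun w => Im (/ F w)%C) z.
Proof.
intros Hz [CR1 CR2]. rewrite Re_Cinv_fun, Im_Cinv_fun.
assert (Nz := sqnorm_F_neq_0 z Hz).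
set (u := fun w => Re (F w)) in *. set (v := fun w => Im (F w)) in *.
assert (Uu : ex_pu u z) by exact (C1_ex_pu Om u z (C2_C1 _ _ F_re_C2) Hz).
assert (Uv : ex_pv u z) by exact (C1_ex_pv Om u z (C2_C1 _ _ F_re_C2) Hz).
assert (Vu : ex_pu v z) by exact (C1_ex_pu Om v z (C2_C1 _ _ F_im_C2) Hz).
assert (Vv : ex_pv v z) by exact (C1_ex_pv Om v z (C2_C1 _ _ F_im_C2) Hz).
unfold cauchy_riemann.
rewrite !pu_mult, !pv_mult, !pu_inv, !pv_inv, !pu_plus, !pv_plus, !pu_mult, !pv_mult, pu_opp, pv_opp;
  auto 6 using ex_pu_mult, ex_pv_mult, ex_pu_plus, ex_pv_plus, ex_pu_inv, ex_pv_inv, ex_pu_opp, ex_pv_opp.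
unfold u, v in *. rewrite CR1, CR2. split; field; exact Nz.
Qed.

End HolomorphicInverse.

Lemma dzR_scal c f z : dzR (fun w => c * f w) z = (RtoC c * dzR f z)%C.
Proof.
rewrite !dzR_coords, pu_scal, pv_scal. unfold RtoC, Cmult. apply injective_projections; simpl; field.
Qed.

Lemma Copp_Cinv_Cconj_neq_0 (c : C) : c <> 0%C -> (- / Cconj c)%C <> 0%C.
Proof.
intros Hc E.
assert (Hm : Cmod c <> 0) by (intro H; apply Hc, Cmod_eq_0, H).
assert (Hcc : Cconj c <> 0%C) by (intro H; apply Hm; rewrite <- Cmod_conj, H; apply Cmod_0).
apply (f_equal Cmod) in E. rewrite Cmod_opp, Cmod_inv, Cmod_conj, Cmod_0 in E by exact Hcc.
exact (Rinv_neq_0_compat _ Hm E).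
Qed.

(* [2 Re (1/g) = 1/g + 1/conj g], so both sides equal [g q - p / conj g]. *)
Lemma Cinv_mul_add_sub_Re (g p q : C) : g <> 0%C ->
  (/ g * p + g * q - RtoC (Re (/ g)) * (RtoC 2 * p) = - / Cconj g * (p - RtoC (Cmod g ^ 2) * q))%C.
Proof.
intros Hg. assert (Hn := sqnorm_neq_0 g Hg). unfold Cmod. rewrite pow2_sqrt by nra.
destruct g as [x y], p as [p1 p2], q as [q1 q2]. simpl in Hn.
unfold Cmult, Cplus, Cminus, Copp, Cinv, Cconj, RtoC, Re. simpl.
apply injective_projections; simpl; field; intros E; apply Hn; nra.
Qed.

Section Weierstrass.
Variable Om : C -> Prop.
Hypothesis Om_open : open Om.
Variable g : C -> C.
Variables P Q : C -> R.
Hypothesis g_re_C2 : C2_on Om (fun w => Re (g w)).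
Hypothesis g_im_C2 : C2_on Om (fun w => Im (g w)).
Hypothesis P_C2 : C2_on Om P.
Hypothesis Q_C2 : C2_on Om Q.
Hypothesis g_neq_0 : forall z, Om z -> g z <> 0%C.
Hypothesis g_holomorphic : forall z, Om z -> dzb g z = 0%C.
Hypothesis P_Q_laplacian : forall z, Om z -> dzzbR P z = (RtoC (Cmod (g z) ^ 2)%R * dzzbR Q z)%C.

Let re_g w := Re (g w).
Let im_g w := Im (g w).
Let re_h w := Re (/ g w)%C.
Let im_h w := Im (/ g w)%C.

(* The partial derivatives [M_u] and [M_v] prescribed by [M_z = P_z / g + g Q_z]. *)
Definition weierstrass_u (w : C) : R := cr_form_u re_h im_h P w + cr_form_u re_g im_g Q w.
Definition weierstrass_v (w : C) : R := cr_form_v re_h im_h P w + cr_form_v re_g im_g Q w.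

Lemma cauchy_riemann_g z : Om z -> cauchy_riemann re_g im_g z.
Proof. intros Hz. apply dzb_eq_0_iff, g_holomorphic, Hz. Qed.

Lemma cauchy_riemann_h z : Om z -> cauchy_riemann re_h im_h z.
Proof. intros Hz. apply (cauchy_riemann_Cinv Om g g_re_C2 g_im_C2 g_neq_0 z Hz), cauchy_riemann_g, Hz. Qed.

Lemma laplacian_P z : Om z -> laplacian P z = (re_g z * re_g z + im_g z * im_g z) * laplacian Q z.
Proof.
intros Hz. generalize (f_equal fst (P_Q_laplacian z Hz)). rewrite !dzzbR_coords.
unfold Cmod. rewrite pow2_sqrt by nra. unfold re_g, im_g, Re, Im. simpl. lra.
Qed.

Lemma weierstrass_u_C1 : C1_on Om weierstrass_u.
Proof.
apply (C1_on_plus Om Om_open); apply (cr_form_u_C1 Om Om_open); unfold re_h, im_h, re_g, im_g;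
  auto using C2_C1, Re_Cinv_C2, Im_Cinv_C2.
Qed.

Lemma weierstrass_v_C1 : C1_on Om weierstrass_v.
Proof.
apply (C1_on_plus Om Om_open); apply (cr_form_v_C1 Om Om_open); unfold re_h, im_h, re_g, im_g;
  auto using C2_C1, Re_Cinv_C2, Im_Cinv_C2.
Qed.

Lemma re_h_C1 : C1_on Om re_h.
Proof. apply C2_C1, (Re_Cinv_C2 Om Om_open g); assumption. Qed.
Lemma im_h_C1 : C1_on Om im_h.
Proof. apply C2_C1, (Im_Cinv_C2 Om Om_open g); assumption. Qed.

Lemma weierstrass_curl_div z : Om z ->
  pv weierstrass_u z - pu weierstrass_v z = im_h z * laplacian P z + im_g z * laplacian Q z /\
  pu weierstrass_u z + pv weierstrass_v z = re_h z * laplacian P z + re_g z * laplacian Q z.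
Proof.
intros Hz.
assert (Hg1 := C2_C1 _ _ g_re_C2). assert (Hg2 := C2_C1 _ _ g_im_C2).
assert (Uh := cr_form_u_C1 Om Om_open re_h im_h P re_h_C1 im_h_C1 P_C2).
assert (Vh := cr_form_v_C1 Om Om_open re_h im_h P re_h_C1 im_h_C1 P_C2).
assert (Ug := cr_form_u_C1 Om Om_open re_g im_g Q Hg1 Hg2 Q_C2).
assert (Vg := cr_form_v_C1 Om Om_open re_g im_g Q Hg1 Hg2 Q_C2).
assert (Curl_h := cr_form_curl Om Om_open re_h im_h P re_h_C1 im_h_C1 P_C2 cauchy_riemann_h z Hz).
assert (Curl_g := cr_form_curl Om Om_open re_g im_g Q Hg1 Hg2 Q_C2 cauchy_riemann_g z Hz).
assert (Div_h := cr_form_div Om Om_open re_h im_h P re_h_C1 im_h_C1 P_C2 cauchy_riemann_h z Hz).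
assert (Div_g := cr_form_div Om Om_open re_g im_g Q Hg1 Hg2 Q_C2 cauchy_riemann_g z Hz).
unfold weierstrass_u, weierstrass_v.
rewrite pu_plus, pv_plus, pu_plus, pv_plus; try (eapply C1_ex_pu || eapply C1_ex_pv; eassumption).
split; lra.
Qed.

(* Since [1/g = conj g / |g|^2] and [Delta P = |g|^2 Delta Q]. *)
Lemma weierstrass_closed z : Om z -> pv weierstrass_u z = pu weierstrass_v z.
Proof.
intros Hz. destruct (weierstrass_curl_div z Hz) as [Curl _].
assert (Nz := sqnorm_F_neq_0 Om g g_neq_0 z Hz).
rewrite laplacian_P in Curl by exact Hz.
unfold im_h, im_g, re_g in *. rewrite (equal_f (Im_Cinv_fun g) z) in Curl.
apply Rminus_diag_uniq. rewrite Curl. field. exact Nz.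
Qed.

Lemma weierstrass_div z : Om z -> pu weierstrass_u z + pv weierstrass_v z = 2 * re_h z * laplacian P z.
Proof.
intros Hz. destruct (weierstrass_curl_div z Hz) as [_ ->].
assert (Nz := sqnorm_F_neq_0 Om g g_neq_0 z Hz).
rewrite (laplacian_P z Hz). unfold re_h, re_g, im_g. rewrite (equal_f (Re_Cinv_fun g) z).
field. exact Nz.
Qed.

Lemma dzR_weierstrass_iff M z :
  dzR M z = (/ g z * dzR P z + g z * dzR Q z)%C <-> pu M z = weierstrass_u z /\ pv M z = weierstrass_v z.
Proof.
assert (E : (/ g z * dzR P z + g z * dzR Q z)%C = (weierstrass_u z / 2, - weierstrass_v z / 2)).
{ rewrite !dzR_coords. unfold weierstrass_u, weierstrass_v, cr_form_u, cr_form_v, re_h, im_h, re_g, im_g.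
  cbv beta. generalize (/ g z)%C. intros [h1 h2]. generalize (g z). intros [x y].
  unfold Re, Im, Cmult, Cplus. apply injective_projections; simpl; field. }
rewrite E, dzR_coords. split.
- intros H. apply (f_equal fst) in H as H1. apply (f_equal snd) in H as H2. simpl in H1, H2. lra.
- intros [-> ->]. reflexivity.
Qed.

Lemma weierstrass_potential_exists : simply_connected Om ->
  exists M, C2_on Om M /\ forall z, Om z -> dzR M z = (/ g z * dzR P z + g z * dzR Q z)%C.
Proof.
intros Hsc.
destruct (poincare_lemma Om weierstrass_u weierstrass_v weierstrass_u_C1 weierstrass_v_C1
  weierstrass_closed Hsc) as [M [HM HMd]].
exists M. split; [exact HM|]. intros z Hz. apply dzR_weierstrass_iff, HMd, Hz.
Qed.

Section Potential.
Variable M : C -> R.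
Hypothesis M_C2 : C2_on Om M.
Hypothesis M_dz : forall z, Om z -> dzR M z = (/ g z * dzR P z + g z * dzR Q z)%C.

Lemma potential_identity z : Om z ->
  (dzR M z - RtoC (Re (/ g z)) * dzR (fun w => (2 * P w)%R) z
   = - / Cconj (g z) * (dzR P z - RtoC (Cmod (g z) ^ 2) * dzR Q z))%C.
Proof. intros Hz. rewrite dzR_scal, M_dz by exact Hz. apply Cinv_mul_add_sub_Re, g_neq_0, Hz. Qed.

Lemma potential_laplacian z : Om z -> laplacian M z = 2 * Re (/ g z) * laplacian P z.
Proof.
intros Hz. unfold laplacian.
rewrite (pu_ext_on Om Om_open (pu M) weierstrass_u), (pv_ext_on Om Om_open (pv M) weierstrass_v) by
  (auto; intros w Hw; apply (proj1 (dzR_weierstrass_iff M w)), M_dz, Hw).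
apply weierstrass_div, Hz.
Qed.

Lemma potential_second_kind :
  (forall z, Om z -> (dzR P z - RtoC (Cmod (g z) ^ 2)%R * dzR Q z)%C <> 0%C) ->
  WD2 Om (fun z => / g z)%C M (fun z => 2 * P z).
Proof.
intros Hnd.
assert (N_C2 : C2_on Om (fun z => 2 * P z)) by (apply (C2_on_mult Om Om_open); auto using C2_on_const).
split; [split; [apply (Re_Cinv_C2 Om Om_open g) | apply (Im_Cinv_C2 Om Om_open g)]; assumption|].
split; [exact M_C2|]. split; [exact N_C2|]. split; [|split; [|split]].
- intros z Hz E. generalize (f_equal fst (Cinv_r (g z) (g_neq_0 z Hz))). rewrite E.
  unfold Cmult. simpl. lra.
- intros z Hz. apply dzb_eq_0_iff, cauchy_riemann_h, Hz.
- intros z Hz. rewrite !dzzbR_coords, (schwarz_on Om Om_open M z), (schwarz_on Om Om_open _ z N_C2),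
    potential_laplacian by assumption.
  unfold laplacian. rewrite !pu_fun_scal, !pv_fun_scal. generalize (Re (/ g z)). intros k.
  unfold RtoC, Cmult. apply injective_projections; simpl; field.
- intros z Hz. rewrite potential_identity by exact Hz.
  apply Cmult_neq_0; [apply Copp_Cinv_Cconj_neq_0, g_neq_0 | apply Hnd]; exact Hz.
Qed.

End Potential.
End Weierstrass.

Open Scope C_scope.

Theorem mainTheorem1 :
  forall (Om : C -> Prop) (g : C -> C) (P Q : C -> R),
    simply_connected Om ->
    WD1 Om g P Q ->
    let h : C -> C := fun z => / g z in
    let N : C -> R := fun z => (2 * P z)%R in
    (exists M : C -> R, C2_on Om M /\
       forall z, Om z -> dzR M z = / g z * dzR P z + g z * dzR Q z) /\
    (forall M : C -> R, C2_on Om M ->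
       (forall z, Om z -> dzR M z = / g z * dzR P z + g z * dzR Q z) ->
       WD2 Om h M N /\
       forall z, Om z ->
         dzR M z - RtoC (Re (h z)) * dzR N z
         = - / Cconj (g z) * (dzR P z - RtoC ((Cmod (g z) ^ 2)%R) * dzR Q z)).
Proof.
intros Om g P Q Hsc [[Hg1 Hg2] [HP [HQ [Hg0 [Hhol [Hlap Hnd]]]]]] h N.
assert (Hop := simply_connected_open Om Hsc).
split.
- apply (weierstrass_potential_exists Om Hop g P Q); assumption.
- intros M HM HMd. split.
  + apply (potential_second_kind Om Hop g P Q); assumption.
  + intros z Hz. apply (potential_identity Om g P Q Hg0 M HMd z Hz).
Qed.
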